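(* Let $0<a<1$ and define $\eta:\mathbb C_+\to\mathbb C$, $\mathbb C_+=\{\operatorname{Re}w>0\}$, by $\eta(w)=w-(\log(w+3))^a$ (principal branches). Then $\eta$ is univalent on $\mathbb C_+$, and $\Omega_0=\eta(\mathbb C_+)$ is a logarithmic starlike at infinity domain with $p$-frequencies which is not contained in any half-plane.
   Context: A logarithmic starlike at infinity domain is $\{x+iy:x>\psi(y)\}$ where $\psi:\mathbb R\to\mathbb R$ is differentiable with $|\psi'|\le K$ for some $K>0$, and there exist $R>0$ and $0<b<1$ with $\psi(y)\ge -b\log|y|$ for $|y|\ge R$. Such a domain $\Omega_0$ has $p$-frequencies if there exists $p_0\ge1$ such that $e^{\lambda z}\in H^{p_0}(\Omega_0)$ for all $\lambda\le0$, where for a simply connected domain $G\subsetneq\mathbb C$ and $p\in[1,\infty)$, $H^p(G)$ is the space of holomorphic $f$ on $G$ such that $|f|^p$ has a harmonic majorant. *)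

From Stdlib Require Import Reals Lra.
From Coquelicot Require Import Coquelicot.
Open Scope R_scope.

(** Principal argument, values in (-PI, PI]. *)
Definition Carg (z : C) : R :=
  let x := Re z in let y := Im z in
  if Rlt_dec 0 x then atan (y / x)
  else if Rlt_dec x 0 then
    (if Rle_dec 0 y then atan (y / x) + PI else atan (y / x) - PI)
  else if Rlt_dec 0 y then PI / 2
  else if Rlt_dec y 0 then - (PI / 2) else 0.

Definition Cexp (z : C) : C :=
  (exp (Re z) * cos (Im z), exp (Re z) * sin (Im z)).

(** Principal logarithm (defined for z <> 0). *)
Definition Clog (z : C) : C := (ln (Cmod z), Carg z).

(** Principal power z^a = exp (a log z), with 0^a = 0. *)
Definition Cpow (z : C) (a : R) : C :=
  if Req_EM_T (Cmod z) 0 then 0%C else Cexp (Cmult (RtoC a) (Clog z)).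

Definition Cplus_half (w : C) : Prop := 0 < Re w.

Definition eta (a : R) (w : C) : C :=
  Cminus w (Cpow (Clog (Cplus w (RtoC 3))) a).

Definition holomorphic_on (G : C -> Prop) (f : C -> C) : Prop :=
  forall z, G z -> @ex_derive C_AbsRing C_NormedModule f z.

Definition univalent_on (G : C -> Prop) (f : C -> C) : Prop :=
  holomorphic_on G f /\ (forall z w, G z -> G w -> f z = f w -> z = w).

Definition open_set (G : C -> Prop) : Prop :=
  forall z, G z -> exists eps : posreal,
    forall w, Cmod (Cminus w z) < eps -> G w.

Definition dx (u : C -> R) : C -> R := fun z => Derive (fun t => u (t, Im z)) (Re z).
Definition dy (u : C -> R) : C -> R := fun z => Derive (fun t => u (Re z, t)) (Im z).

Definition cont_at (u : C -> R) (z : C) : Prop :=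
  forall eps : posreal, exists delta : posreal,
    forall w, Cmod (Cminus w z) < delta -> Rabs (u w - u z) < eps.

Definition harmonic_on (G : C -> Prop) (u : C -> R) : Prop :=
  forall z, G z ->
    ex_derive (fun t => u (t, Im z)) (Re z) /\
    ex_derive (fun t => u (Re z, t)) (Im z) /\
    ex_derive (fun t => dx u (t, Im z)) (Re z) /\
    ex_derive (fun t => dx u (Re z, t)) (Im z) /\
    ex_derive (fun t => dy u (t, Im z)) (Re z) /\
    ex_derive (fun t => dy u (Re z, t)) (Im z) /\
    cont_at u z /\ cont_at (dx u) z /\ cont_at (dy u) z /\
    cont_at (dx (dx u)) z /\ cont_at (dy (dx u)) z /\
    cont_at (dx (dy u)) z /\ cont_at (dy (dy u)) z /\
    dx (dx u) z + dy (dy u) z = 0.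

Definition rpow (x p : R) : R := if Rle_dec x 0 then 0 else Rpower x p.

(** Hardy space H^p(G): holomorphic f on G such that |f|^p has a harmonic
    majorant on G. *)
Definition in_Hardy (p : R) (G : C -> Prop) (f : C -> C) : Prop :=
  holomorphic_on G f /\
  exists u : C -> R, harmonic_on G u /\
    forall z, G z -> rpow (Cmod (f z)) p <= u z.

Definition log_starlike_at_infinity (Om : C -> Prop) : Prop :=
  exists psi : R -> R,
    (forall y, ex_derive psi y) /\
    (exists K, 0 < K /\ forall y, Rabs (Derive psi y) <= K) /\
    (exists Rr b, 0 < Rr /\ 0 < b < 1 /\
       forall y, Rr <= Rabs y -> - b * ln (Rabs y) <= psi y) /\
    (forall z, Om z <-> psi (Im z) < Re z).

Definition has_p_frequencies (Om : C -> Prop) : Prop :=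
  exists p0, 1 <= p0 /\
    forall lam : R, lam <= 0 -> in_Hardy p0 Om (fun z => Cexp (Cmult (RtoC lam) z)).

Definition in_some_half_plane (Om : C -> Prop) : Prop :=
  exists (c : C) (t : R), c <> 0%C /\ forall z, Om z -> t <= Re (Cmult c z).

From Pilot Require Import Defs.
From Stdlib Require Import Reals Lra Lia ClassicalEpsilon.
From Coquelicot Require Import Coquelicot.
Open Scope R_scope.

(* Write [eta w = w - Q w] with [Q w = (log (w + 3))^a]. On the closed right half-plane
   [|Q'| = a |log (w + 3)|^(a-1) / |w + 3| <= 1/3], so [eta] is injective there, and for
   every [z] the map [w |-> z + Q (proj w)], with [proj] the projection onto the closed
   half-plane, is a contraction. Its fixed point lies in the open half-plane, i.e. [z] lies
   in [Omega_0], exactly when [z] lies to the right of the image of the imaginary axis. That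
   image is the graph [x = psi y], where [|psi'| <= 1/2] because [y |-> Im eta (i y)] has
   derivative at least [2/3], and [psi y >= -(log (3 + 2|y|) + 2)^a]: this is the
   log-starlike description. The real points [x - (log (x + 3))^a] tend to [+oo], while
   [Re Q (i y) >= cos (a PI / 2) (log |y|)^a] drives points just right of the boundary curve
   to [-oo] in both vertical directions, so no half-plane contains [Omega_0]. Finally, for
   [lambda <= 0], [lambda x <= |lambda| (log (3 + 2|y|) + 2)^a <= log (3 + 2|y|) / 2 + C] on
   [Omega_0], and [Omega_0] lies in [{x > 1 - |y|/2 - M}] where [Re sqrt (z + M)] is harmonic
   and at least [sqrt (3 + 2|y|) / 3]; a multiple of it is a harmonic majorant of
   [|e^(lambda z)|], so [p_0 = 1] works. *)

Lemma MVT_abs_bound (f df : R -> R) (x M : R) :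
  (forall c, Rabs c <= Rabs x -> derivable_pt_lim f c (df c)) ->
  (forall c, Rabs c <= Rabs x -> Rabs (df c) <= M) ->
  Rabs (f x - f 0) <= M * Rabs x.
Proof.
  intros Hd Hb.
  assert (HM : 0 <= M) by (specialize (Hb 0); rewrite Rabs_R0 in Hb;
    pose proof (Rabs_pos (df 0)); pose proof (Rabs_pos x); lra).
  destruct (Rtotal_order x 0) as [Hx|[Hx|Hx]].
  - destruct (MVT_cor2 f df x 0 Hx) as [c [Hc1 Hc2]].
    + intros c Hc. apply Hd. rewrite (Rabs_left1 x), (Rabs_left1 c); lra.
    + rewrite <- Rabs_Ropp, Ropp_minus_distr, Hc1, Rabs_mult, Rminus_0_l, Rabs_Ropp.
      apply Rmult_le_compat_r; [apply Rabs_pos|].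
      apply Hb. rewrite !Rabs_left; lra.
  - subst. rewrite Rminus_diag, !Rabs_R0. lra.
  - destruct (MVT_cor2 f df 0 x Hx) as [c [Hc1 Hc2]].
    + intros c Hc. apply Hd. rewrite !Rabs_right; lra.
    + rewrite Hc1, Rabs_mult, Rminus_0_r.
      apply Rmult_le_compat_r; [apply Rabs_pos|].
      apply Hb. rewrite !Rabs_right; lra.
Qed.

Lemma exp_le_3_of_le_1 (s : R) : s <= 1 -> exp s <= 3.
Proof.
  intros Hs. pose proof exp_le_3.
  destruct (Req_dec s 1); [subst; lra|].
  assert (exp s < exp 1) by (apply exp_increasing; lra). lra.
Qed.

Lemma Rabs_exp_sub_1_le (s : R) : Rabs s <= 1 -> Rabs (exp s - 1) <= 3 * Rabs s.
Proof.
  intros Hs. rewrite <- exp_0.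
  apply (MVT_abs_bound exp exp).
  - intros. apply derivable_pt_lim_exp.
  - intros c Hc. rewrite Rabs_right by (left; apply exp_pos).
    apply exp_le_3_of_le_1. pose proof (Rle_abs c). lra.
Qed.

Lemma Rabs_exp_sub_1_sub_le (s : R) : Rabs s <= 1 ->
  Rabs (exp s - 1 - s) <= 3 * Rabs s * Rabs s.
Proof.
  intros Hs.
  replace (exp s - 1 - s) with ((exp s - s) - (exp 0 - 0)) by (rewrite exp_0; ring).
  apply (MVT_abs_bound (fun t => exp t - t) (fun t => exp t - 1)).
  - intros. apply derivable_pt_lim_minus;
      [apply derivable_pt_lim_exp | apply derivable_pt_lim_id].
  - intros c Hc. apply Rle_trans with (3 * Rabs c); [apply Rabs_exp_sub_1_le|]; lra.
Qed.

Lemma Rabs_sin_le (t : R) : Rabs (sin t) <= Rabs t.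
Proof.
  replace (sin t) with (sin t - sin 0) by (rewrite sin_0; ring).
  rewrite <- (Rmult_1_l (Rabs t)).
  apply (MVT_abs_bound sin cos).
  - intros. apply derivable_pt_lim_sin.
  - intros. apply Rabs_le. split; apply COS_bound.
Qed.

Lemma Rabs_cos_sub_1_le (t : R) : Rabs (cos t - 1) <= Rabs t.
Proof.
  rewrite <- cos_0. rewrite <- (Rmult_1_l (Rabs t)).
  apply (MVT_abs_bound cos (fun x => - sin x)).
  - intros. apply derivable_pt_lim_cos.
  - intros c _. rewrite Rabs_Ropp. apply Rabs_le. split; apply SIN_bound.
Qed.

Lemma Rabs_cos_sub_1_le_sqr (t : R) : Rabs (cos t - 1) <= Rabs t * Rabs t.
Proof.
  rewrite <- cos_0.
  apply (MVT_abs_bound cos (fun x => - sin x)).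
  - intros. apply derivable_pt_lim_cos.
  - intros c Hc. rewrite Rabs_Ropp. eapply Rle_trans; [apply Rabs_sin_le | exact Hc].
Qed.

Lemma Rabs_sin_sub_le_sqr (t : R) : Rabs (sin t - t) <= Rabs t * Rabs t.
Proof.
  replace (sin t - t) with ((sin t - t) - (sin 0 - 0)) by (rewrite sin_0; ring).
  apply (MVT_abs_bound (fun x => sin x - x) (fun x => cos x - 1)).
  - intros. apply derivable_pt_lim_minus;
      [apply derivable_pt_lim_sin | apply derivable_pt_lim_id].
  - intros c Hc. eapply Rle_trans; [apply Rabs_cos_sub_1_le | exact Hc].
Qed.

Lemma ln_le_sub_1 (t : R) : 0 < t -> ln t <= t - 1.
Proof.
  intros Ht. pose proof (exp_ineq1_le (ln t)) as H. rewrite exp_ln in H by exact Ht. lra.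
Qed.

Lemma ln_3_bounds : 1 <= ln 3 <= 2.
Proof.
  split.
  - rewrite <- (ln_exp 1). apply ln_le; [apply exp_pos | apply exp_le_3; lra].
  - rewrite <- (ln_exp 2). apply ln_le; [lra|]. pose proof (exp_ineq1_le 2). lra.
Qed.

Lemma Rpower_le_self (x e : R) : 1 <= x -> e <= 1 -> Rpower x e <= x.
Proof. intros Hx He. rewrite <- (Rpower_1 x) at 2 by lra. apply Rle_Rpower; lra. Qed.

Lemma exp_le_compat (x y : R) : x <= y -> exp x <= exp y.
Proof.
  intros H. destruct (Req_dec x y); [subst; lra|]. left. apply exp_increasing. lra.
Qed.

Lemma Rpower_pos (x e : R) : 0 < Rpower x e.
Proof. apply exp_pos. Qed.

Lemma Rpower_le_eps_mult (a c : R) : a < 1 -> 0 < c ->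
  exists X0, 0 < X0 /\ forall X, X0 <= X -> Rpower X a <= c * X.
Proof.
  intros Ha Hc. exists (Rpower c (/ (a - 1))). split; [apply Rpower_pos|].
  intros X HX. pose proof (Rpower_pos c (/ (a - 1))) as HX0.
  replace a with ((a - 1) + 1) at 1 by ring.
  rewrite Rpower_plus, Rpower_1 by lra.
  apply Rmult_le_compat_r; [lra|].
  replace c with (Rpower (Rpower c (/ (a - 1))) (a - 1))
    by (rewrite Rpower_mult, Rinv_l, Rpower_1; lra).
  set (X0 := Rpower c (/ (a - 1))) in *.
  unfold Rpower. apply exp_le_compat.
  apply Rmult_le_compat_neg_l; [lra|]. apply ln_le; lra.
Qed.

Lemma cos_le_cos_of_Rabs_le (x y : R) : Rabs x <= y <= PI -> cos y <= cos x.
Proof.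
  intros [H1 H2].
  replace (cos x) with (cos (Rabs x))
    by (unfold Rabs; destruct Rcase_abs; [apply cos_neg | reflexivity]).
  pose proof (Rabs_pos x). apply cos_decr_1; lra.
Qed.

Lemma Rpower_le_half_add (a c : R) : 0 <= a < 1 -> 0 <= c ->
  exists C0, forall X, 0 < X -> c * Rpower X a <= X / 2 + C0.
Proof.
  intros Ha Hc.
  destruct (Rpower_le_eps_mult a (/ (2 * (c + 1))) (proj2 Ha)) as [X0 [HX0 Hp]];
    [apply Rinv_0_lt_compat; lra|].
  exists (c * Rpower X0 a). intros X HX. pose proof (Rpower_pos X0 a).
  destruct (Rle_or_lt X0 X) as [HXX0|HXX0].
  - specialize (Hp X HXX0).
    assert (c * Rpower X a <= c / (c + 1) * (X / 2)).
    { apply Rle_trans with (c * (/ (2 * (c + 1)) * X)); [apply Rmult_le_compat_l; lra|].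
      right. field. lra. }
    assert (c / (c + 1) <= 1)
      by (apply (Rmult_le_reg_r (c + 1)); [lra|]; field_simplify; lra).
    assert (0 <= c / (c + 1)) by (apply Rdiv_le_0_compat; lra).
    assert (0 <= c * Rpower X0 a) by nra.
    set (q := c / (c + 1)) in *. nra.
  - assert (Rpower X a <= Rpower X0 a) by (apply Rle_Rpower_l; lra). nra.
Qed.

Lemma derivable_pt_lim_inverse (G Y : R -> R) (m g v : R) : 0 < m -> g <> 0 ->
  (forall u, G (Y u) = u) ->
  (forall y1 y2, y2 <= y1 -> m * (y1 - y2) <= G y1 - G y2) ->
  derivable_pt_lim G (Y v) g -> derivable_pt_lim Y v (/ g).
Proof.
  intros Hm Hg HGY Hmon Hd eps He.
  assert (Hlip : forall y1 y2, m * Rabs (y1 - y2) <= Rabs (G y1 - G y2)).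
  { intros y1 y2. destruct (Rle_dec y2 y1).
    - specialize (Hmon y1 y2 r). rewrite !Rabs_right by nra. lra.
    - specialize (Hmon y2 y1 ltac:(lra)). rewrite !Rabs_left by nra. lra. }
  assert (Hg' : 0 < Rabs g) by (apply Rabs_pos_lt, Hg).
  destruct (Hd (eps * m * Rabs g / 2)) as [d Hdd].
  { apply Rdiv_lt_0_compat; [repeat apply Rmult_lt_0_compat|]; lra. }
  assert (Hdm : 0 < d * m) by (pose proof (cond_pos d); nra).
  exists (mkposreal _ Hdm). intros h Hh0 Hh. simpl in Hh.
  set (y := Y v). set (k := Y (v + h) - y).
  assert (HGk : G (y + k) - G y = h)
    by (unfold k; rewrite Rplus_minus; unfold y; rewrite !HGY; ring).
  assert (Hk0 : k <> 0) by (intros E; rewrite E, Rplus_0_r in HGk; lra).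
  assert (Hkh : m * Rabs k <= Rabs h).
  { specialize (Hlip (y + k) y). rewrite HGk in Hlip.
    replace (y + k - y) with k in Hlip by ring. exact Hlip. }
  assert (Hh1 : 0 < Rabs h) by (apply Rabs_pos_lt, Hh0).
  assert (Hkd : Rabs k < d) by (apply (Rmult_lt_reg_l m); lra).
  specialize (Hdd k Hk0 Hkd). fold y in Hdd. rewrite HGk in Hdd.
  change (Rabs (k / h - / g) < eps).
  replace (k / h - / g) with (- ((h / k - g) * (k / h) / g)) by (field; tauto).
  rewrite Rabs_Ropp, Rabs_div, Rabs_mult by auto.
  assert (Hkh' : Rabs (k / h) <= / m).
  { rewrite Rabs_div by auto. apply (Rmult_le_reg_r (Rabs h * m)); [nra|]. field_simplify; lra. }
  apply Rle_lt_trans with (eps * m * Rabs g / 2 * / m / Rabs g).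
  - apply (Rmult_le_compat_r (/ Rabs g)); [left; apply Rinv_0_lt_compat, Hg'|].
    apply Rmult_le_compat; [apply Rabs_pos | apply Rabs_pos | lra | exact Hkh'].
  - field_simplify; lra.
Qed.

Lemma re_minus (u v : C) : Re (u - v) = Re u - Re v.
Proof. destruct u, v; simpl; ring. Qed.

Lemma im_minus (u v : C) : Im (u - v) = Im u - Im v.
Proof. destruct u, v; simpl; ring. Qed.

Lemma im_le_Cmod (u : C) : Rabs (Im u) <= Cmod u.
Proof.
  destruct u as [x y]; unfold Cmod; simpl.
  rewrite <- sqrt_Rsqr_abs. apply sqrt_le_1_alt. unfold Rsqr. nra.
Qed.

Lemma Re_le_Cmod (u : C) : Re u <= Cmod u.
Proof. pose proof (re_le_Cmod u). pose proof (Rle_abs (Re u)). lra. Qed.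

Lemma Cmod_le_Rabs_Re_Im (u : C) : Cmod u <= Rabs (Re u) + Rabs (Im u).
Proof.
  destruct u as [x y]; unfold Cmod; simpl.
  pose proof (Rabs_pos x); pose proof (Rabs_pos y).
  rewrite <- (sqrt_Rsqr (Rabs x + Rabs y)) by lra.
  apply sqrt_le_1_alt. pose proof (Rsqr_abs x); pose proof (Rsqr_abs y).
  unfold Rsqr in *. nra.
Qed.

Lemma Cmod_le_of_Rabs_le (u w : C) :
  Rabs (Re u) <= Rabs (Re w) -> Rabs (Im u) <= Rabs (Im w) -> Cmod u <= Cmod w.
Proof.
  destruct u as [x y], w as [x' y']; unfold Cmod; simpl. intros H1 H2.
  apply sqrt_le_1_alt.
  pose proof (Rsqr_abs x); pose proof (Rsqr_abs y).
  pose proof (Rsqr_abs x'); pose proof (Rsqr_abs y').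
  pose proof (Rabs_pos x); pose proof (Rabs_pos y). unfold Rsqr in *. nra.
Qed.

Lemma Cmod_pos_of_Re_pos (u : C) : 0 < Re u -> 0 < Cmod u.
Proof. pose proof (Re_le_Cmod u). lra. Qed.

Lemma Re_ge_sub_Cmod (z w : C) : Re z - Cmod (w - z) <= Re w.
Proof.
  pose proof (re_le_Cmod (w - z)) as H. rewrite re_minus in H.
  unfold Rabs in H. destruct Rcase_abs in H; lra.
Qed.

Lemma Cmod_sub_Cmod_le (u v : C) : Cmod u - Cmod v <= Cmod (u - v).
Proof.
  pose proof (Cmod_triangle (u - v) v) as H. replace (u - v + v)%C with u in H by ring. lra.
Qed.

Definition proj_right_half (w : C) : C := (Rmax 0 (Re w), Im w).

Lemma Re_proj_right_half_nonneg (w : C) : 0 <= Re (proj_right_half w).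
Proof. apply Rmax_l. Qed.

Lemma proj_right_half_id (w : C) : 0 <= Re w -> proj_right_half w = w.
Proof.
  intros H. unfold proj_right_half. rewrite Rmax_right by exact H. destruct w; reflexivity.
Qed.

Lemma proj_right_half_nonexpansive (u w : C) :
  Cmod (proj_right_half u - proj_right_half w) <= Cmod (u - w).
Proof.
  apply Cmod_le_of_Rabs_le; rewrite ?re_minus, ?im_minus; simpl; [|lra].
  unfold Rmax. destruct (Rle_dec 0 (Re u)), (Rle_dec 0 (Re w)); unfold Rabs;
    repeat destruct Rcase_abs; lra.
Qed.

Lemma Cexp_add (u v : C) : Cexp (u + v) = (Cexp u * Cexp v)%C.
Proof.
  destruct u as [a b], v as [c d]. unfold Cexp; simpl.
  rewrite exp_plus, cos_plus, sin_plus.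
  apply injective_projections; simpl; ring.
Qed.

Lemma Cmod_Cexp (u : C) : Cmod (Cexp u) = exp (Re u).
Proof.
  destruct u as [s t]. unfold Cexp, Cmod; simpl.
  transitivity (sqrt (exp s ^ 2)); [|apply sqrt_pow2; left; apply exp_pos].
  f_equal. pose proof (sin2_cos2 t) as E. unfold Rsqr in E.
  replace (exp s ^ 2) with (exp s ^ 2 * (sin t * sin t + cos t * cos t)) by (rewrite E; ring).
  ring.
Qed.

Lemma Cexp_real (s : R) : Cexp (RtoC s) = RtoC (exp s).
Proof. unfold Cexp; simpl. rewrite cos_0, sin_0. apply injective_projections; simpl; ring. Qed.

Lemma Cmod_Cexp_sub_1_sub_le (u : C) : Cmod u <= 1 -> Cmod (Cexp u - 1 - u) <= 10 * Cmod u ^ 2.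
Proof.
  intros Hu. rewrite Cmod2_alt.
  pose proof (re_le_Cmod u) as Hs. pose proof (im_le_Cmod u) as Ht.
  eapply Rle_trans; [apply Cmod_le_Rabs_Re_Im|]. rewrite !re_minus, !im_minus.
  destruct u as [s t]. unfold Cexp. simpl Re in *; simpl Im in *.
  assert (He : 0 < exp s <= 3) by (split; [apply exp_pos | apply exp_le_3_of_le_1;
    pose proof (Rle_abs s); lra]).
  pose proof (Rabs_exp_sub_1_sub_le s ltac:(lra)). pose proof (Rabs_exp_sub_1_le s ltac:(lra)).
  pose proof (Rabs_cos_sub_1_le_sqr t). pose proof (Rabs_sin_sub_le_sqr t).
  assert (E1 : Rabs (exp s * cos t - 1 - s) <= 3 * (Rabs t * Rabs t) + 3 * Rabs s * Rabs s).
  { replace (exp s * cos t - 1 - s) with (exp s * (cos t - 1) + (exp s - 1 - s)) by ring.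
    eapply Rle_trans; [apply Rabs_triang|]. rewrite Rabs_mult, (Rabs_right (exp s)) by lra.
    apply Rplus_le_compat; [apply Rmult_le_compat; try lra; apply Rabs_pos | lra]. }
  assert (E2 : Rabs (exp s * sin t - 0 - t) <= 3 * (Rabs t * Rabs t) + 3 * Rabs s * Rabs t).
  { replace (exp s * sin t - 0 - t) with (exp s * (sin t - t) + (exp s - 1) * t) by ring.
    eapply Rle_trans; [apply Rabs_triang|]. rewrite !Rabs_mult, (Rabs_right (exp s)) by lra.
    apply Rplus_le_compat; apply Rmult_le_compat; try lra; apply Rabs_pos. }
  rewrite <- (pow2_abs s), <- (pow2_abs t). pose proof (Rabs_pos s); pose proof (Rabs_pos t).
  nra.
Qed.

Lemma Cmod_le_2_Cmod_Cexp_sub_1 (u : C) : Cmod u <= 1/20 -> Cmod u <= 2 * Cmod (Cexp u - 1).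
Proof.
  intros Hu. pose proof (Cmod_Cexp_sub_1_sub_le u ltac:(lra)). pose proof (Cmod_ge_0 u).
  pose proof (Cmod_sub_Cmod_le u (u - (Cexp u - 1))%C).
  replace (u - (u - (Cexp u - 1)))%C with (Cexp u - 1)%C in H1 by ring.
  replace (u - (Cexp u - 1))%C with (- (Cexp u - 1 - u))%C in H1 by ring.
  rewrite Cmod_opp in H1. simpl in H. nra.
Qed.

Lemma Carg_Re_pos (z : C) : 0 < Re z -> Carg z = atan (Im z / Re z).
Proof. intros H. unfold Carg. destruct (Rlt_dec 0 (Re z)); [reflexivity | lra]. Qed.

Lemma Cexp_Clog (z : C) : 0 < Re z -> Cexp (Clog z) = z.
Proof.
  intros H. unfold Clog, Cexp; simpl. rewrite Carg_Re_pos by exact H.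
  rewrite exp_ln by (apply Cmod_pos_of_Re_pos; exact H).
  rewrite cos_atan, sin_atan.
  destruct z as [x y]; simpl in *.
  assert (Hs : Cmod (x, y) = x * sqrt (1 + (y / x)²)).
  { unfold Cmod; simpl. transitivity (sqrt (x ^ 2) * sqrt (1 + (y / x)²)).
    - rewrite <- sqrt_mult_alt by nra. f_equal. unfold Rsqr. field. lra.
    - rewrite sqrt_pow2 by lra. reflexivity. }
  assert (0 < sqrt (1 + (y / x)²)) by (apply sqrt_lt_R0; pose proof (Rle_0_sqr (y / x)); lra).
  rewrite Hs. apply injective_projections; simpl; field; lra.
Qed.

Lemma Clog_real (r : R) : 0 < r -> Clog (RtoC r) = RtoC (ln r).
Proof.
  intros H. unfold Clog. rewrite Carg_Re_pos by (simpl; lra). simpl.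
  rewrite Rdiv_0_l, atan_0, Cmod_R, Rabs_right by lra. reflexivity.
Qed.

Lemma continuity_2d_pt_Cmod (f : R -> R -> R) (z : C) :
  continuity_2d_pt f (Re z) (Im z) ->
  forall eps, 0 < eps -> exists del, 0 < del /\ forall w, Cmod (w - z) < del ->
    Rabs (f (Re w) (Im w) - f (Re z) (Im z)) < eps.
Proof.
  intros Hc eps He. destruct (Hc (mkposreal _ He)) as [d Hd].
  exists d. split; [apply cond_pos|]. intros w Hw.
  pose proof (re_le_Cmod (w - z)). pose proof (im_le_Cmod (w - z)).
  rewrite re_minus in H. rewrite im_minus in H0.
  apply Hd; lra.
Qed.

Lemma Clog_continuous (z : C) : 0 < Re z ->
  forall eps, 0 < eps -> exists del, 0 < del /\ forall w, Cmod (w - z) < del ->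
    Cmod (Clog w - Clog z) < eps.
Proof.
  intros Hz eps He.
  assert (Hmod : continuity_2d_pt (fun x y => ln (sqrt (x ^ 2 + y ^ 2))) (Re z) (Im z)).
  { pose proof (pow2_ge_0 (Im z)).
    apply continuity_1d_2d_pt_comp.
    { apply derivable_continuous_pt. exists (/ sqrt (Re z ^ 2 + Im z ^ 2)).
      apply derivable_pt_lim_ln, sqrt_lt_R0. nra. }
    apply continuity_1d_2d_pt_comp; [apply continuity_pt_sqrt; nra|].
    apply continuity_2d_pt_plus; simpl; repeat apply continuity_2d_pt_mult;
      auto using continuity_2d_pt_id1, continuity_2d_pt_id2, continuity_2d_pt_const. }
  assert (Harg : continuity_2d_pt (fun x y => atan (y / x)) (Re z) (Im z)).
  { apply continuity_1d_2d_pt_comp.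
    { apply derivable_continuous_pt. eexists. apply derivable_pt_lim_atan. }
    apply continuity_2d_pt_mult; [apply continuity_2d_pt_id2|].
    apply continuity_2d_pt_inv; [apply continuity_2d_pt_id1 | lra]. }
  destruct (continuity_2d_pt_Cmod _ z Hmod (eps / 2)) as [d1 [Hd1 H1]]; [lra|].
  destruct (continuity_2d_pt_Cmod _ z Harg (eps / 2)) as [d2 [Hd2 H2]]; [lra|].
  exists (Rmin (Re z) (Rmin d1 d2)).
  split; [repeat apply Rmin_pos; lra|]. intros w Hw.
  apply Rmin_Rgt in Hw as [Hw0 Hw]. apply Rmin_Rgt in Hw as [Hw1 Hw2].
  pose proof (Re_ge_sub_Cmod z w).
  specialize (H1 w Hw1). specialize (H2 w Hw2).
  eapply Rle_lt_trans; [apply Cmod_le_Rabs_Re_Im|].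
  unfold Clog; simpl. rewrite !Carg_Re_pos by lra.
  unfold Rminus in H1, H2. unfold Cmod, Re, Im in *. lra.
Qed.

Lemma is_derive_C_eps (f : C -> C) (z l : C) :
  is_derive f z l <->
  forall eps, 0 < eps -> exists del, 0 < del /\ forall w, Cmod (w - z) < del ->
    Cmod (f w - f z - (w - z) * l) <= eps * Cmod (w - z).
Proof.
  split.
  - intros [_ H] eps Heps.
    assert (Hz : @is_filter_lim (AbsRing_NormedModule C_AbsRing)
      (@locally (AbsRing_UniformSpace C_AbsRing) z) z) by (intros P HP; exact HP).
    destruct (H z Hz (mkposreal _ Heps)) as [del Hd].
    exists del. split; [apply cond_pos | exact Hd].
  - intros H. split; [apply is_linear_scal_l|].
    intros x Hx.
    apply (@is_filter_lim_locally_unique C_AbsRing (AbsRing_NormedModule C_AbsRing)) in Hx.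
    subst x.
    intros eps. destruct (H eps (cond_pos eps)) as [del [Hd Hw]].
    exists (mkposreal _ Hd). exact Hw.
Qed.

(* Coquelicot's rules for functions [K -> K] ([is_derive_comp], [is_derive_id],
   [is_derive_scal_l]) use the codomain [AbsRing_NormedModule C_AbsRing], which is not
   convertible to [C_NormedModule]. *)
Lemma is_derive_C_ring_iff (f : C -> C) (z l : C) :
  @is_derive C_AbsRing (AbsRing_NormedModule C_AbsRing) f z l <-> is_derive f z l.
Proof. split; intros [_ H]; (split; [apply is_linear_scal_l | exact H]). Qed.

Lemma is_derive_C_comp (f g : C -> C) (z df dg : C) :
  is_derive f (g z) df -> is_derive g z dg -> is_derive (fun w => f (g w)) z (dg * df)%C.
Proof.
  intros Hf Hg. exact (is_derive_comp f g z df dg Hf (proj2 (is_derive_C_ring_iff g z dg) Hg)).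
Qed.

Lemma is_derive_C_plus (f g : C -> C) (z df dg : C) :
  is_derive f z df -> is_derive g z dg -> is_derive (fun w => f w + g w)%C z (df + dg)%C.
Proof. exact (is_derive_plus f g z df dg). Qed.

Lemma is_derive_C_minus (f g : C -> C) (z df dg : C) :
  is_derive f z df -> is_derive g z dg -> is_derive (fun w => f w - g w)%C z (df - dg)%C.
Proof. exact (is_derive_minus f g z df dg). Qed.

Lemma is_derive_C_scal (c : C) (f : C -> C) (z l : C) :
  is_derive f z l -> is_derive (fun w => c * f w)%C z (c * l)%C.
Proof.
  intros H. apply (is_derive_ext (fun w => f w * c)%C); [intros; apply Cmult_comm|].
  rewrite Cmult_comm. exact (is_derive_scal_l f z l c (proj2 (is_derive_C_ring_iff f z l) H)).
Qed.

Lemma is_derive_C_id (z : C) : is_derive (fun w : C => w) z (RtoC 1).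
Proof. apply is_derive_C_ring_iff. exact (is_derive_id z). Qed.

Lemma is_derive_C_const (c z : C) : is_derive (fun _ : C => c) z (RtoC 0).
Proof. exact (is_derive_const c z). Qed.

Lemma is_derive_Cexp (z : C) : is_derive Cexp z (Cexp z).
Proof.
  apply is_derive_C_eps. intros eps He.
  set (K := exp (Re z)). assert (HK : 0 < K) by apply exp_pos.
  exists (Rmin 1 (eps / (10 * K))). split.
  { apply Rmin_pos; [lra | apply Rdiv_lt_0_compat; lra]. }
  intros w Hw. apply Rmin_Rgt in Hw as [H1 H2].
  set (h := (w - z)%C) in *.
  replace w with (z + h)%C by (unfold h; ring). rewrite Cexp_add.
  replace (Cexp z * Cexp h - Cexp z - h * Cexp z)%C with (Cexp z * (Cexp h - 1 - h))%C by ring.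
  rewrite Cmod_mult, Cmod_Cexp. fold K.
  pose proof (Cmod_Cexp_sub_1_sub_le h ltac:(lra)). pose proof (Cmod_ge_0 h).
  apply Rmult_gt_compat_l with (r := 10 * K) in H2; [|lra].
  replace (10 * K * (eps / (10 * K))) with eps in H2 by (field; lra).
  apply Rle_trans with (K * (10 * Cmod h ^ 2)); [apply Rmult_le_compat_l; lra|].
  simpl. nra.
Qed.

Lemma is_derive_Clog (z : C) : 0 < Re z -> is_derive Clog z (/ z)%C.
Proof.
  intros Hz. apply is_derive_C_eps. intros eps He.
  assert (Hmz : 0 < Cmod z) by (apply Cmod_pos_of_Re_pos; exact Hz).
  assert (Hz0 : z <> 0%C) by (apply Cmod_gt_0; exact Hmz).
  assert (He1 : 0 < Rmin (1/20) (eps * Cmod z / 20))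
    by (apply Rmin_pos; [lra | apply Rdiv_lt_0_compat; nra]).
  destruct (Clog_continuous z Hz _ He1) as [d [Hd Hcont]].
  exists (Rmin d (Re z)). split; [apply Rmin_pos; lra|].
  intros w Hw. apply Rmin_Rgt in Hw as [Hwd Hwr].
  pose proof (Re_ge_sub_Cmod z w).
  set (A := (Clog w - Clog z)%C).
  pose proof (Hcont w Hwd) as HA. fold A in HA. apply Rmin_Rgt in HA as [HA1 HA2].
  (* [w = z e^A], so the error term is exactly [-(e^A - 1 - A)]. *)
  assert (Ew : w = (z * Cexp A)%C).
  { rewrite <- (Cexp_Clog z Hz) at 1. rewrite <- Cexp_add.
    unfold A. replace (Clog z + (Clog w - Clog z))%C with (Clog w) by ring.
    symmetry. apply Cexp_Clog. lra. }
  change (Clog w - Clog z)%C with A.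
  replace (A - (w - z) * / z)%C with (- (Cexp A - 1 - A))%C by (rewrite Ew; field; exact Hz0).
  rewrite Cmod_opp.
  assert (Hwz : Cmod (w - z) = Cmod z * Cmod (Cexp A - 1)).
  { rewrite <- Cmod_mult. f_equal. rewrite Ew. ring. }
  pose proof (Cmod_le_2_Cmod_Cexp_sub_1 A ltac:(lra)). pose proof (Cmod_ge_0 A).
  eapply Rle_trans; [apply Cmod_Cexp_sub_1_sub_le; lra|].
  assert (Cmod A * Cmod A <= (eps * Cmod z / 20) * (2 * Cmod (Cexp A - 1)))
    by (apply Rmult_le_compat; lra).
  rewrite Hwz. simpl. rewrite Rmult_1_r. nra.
Qed.

Lemma derivable_pt_lim_Re_line (f : C -> C) (z0 d k l : C) (t : R) :
  is_derive f (z0 + RtoC t * d)%C l ->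
  derivable_pt_lim (fun s => Re (k * f (z0 + RtoC s * d)%C)%C) t (Re (k * (d * l))%C).
Proof.
  intros Hd eps He.
  pose proof (Cmod_ge_0 k) as Hk. pose proof (Cmod_ge_0 d) as Hd0.
  set (K := (Cmod k + 1) * (Cmod d + 1)).
  assert (HK : 0 < K) by (unfold K; nra).
  destruct (proj1 (is_derive_C_eps _ _ _) Hd (eps / (2 * K))) as [del [Hdel Hw]].
  { apply Rdiv_lt_0_compat; lra. }
  assert (Hdd : 0 < del / (Cmod d + 1)) by (apply Rdiv_lt_0_compat; lra).
  exists (mkposreal _ Hdd). intros h Hh0 Hh. simpl in Hh.
  set (zt := (z0 + RtoC t * d)%C) in *.
  set (w := (z0 + RtoC (t + h) * d)%C).
  assert (Ewz : (w - zt)%C = (RtoC h * d)%C) by (unfold w, zt; rewrite RtoC_plus; ring).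
  assert (Hwz : Cmod (w - zt) < del).
  { rewrite Ewz, Cmod_mult, Cmod_R.
    apply Rlt_le_trans with (del / (Cmod d + 1) * (Cmod d + 1)); [|right; field; lra].
    pose proof (Rabs_pos h). apply Rle_lt_trans with (Rabs h * (Cmod d + 1)); [nra|].
    apply Rmult_lt_compat_r; lra. }
  specialize (Hw w Hwz). rewrite Ewz, Cmod_mult, Cmod_R in Hw. fold w.
  replace ((Re (k * f w) - Re (k * f zt)) / h - Re (k * (d * l)))
    with ((Re (k * f w) - Re (k * f zt) - h * Re (k * (d * l))) / h) by (field; exact Hh0).
  rewrite <- re_scal_l, <- !re_minus.
  replace (k * f w - k * f zt - RtoC h * (k * (d * l)))%C
    with (k * (f w - f zt - RtoC h * d * l))%C by ring.
  unfold Rdiv. rewrite Rabs_mult, Rabs_inv.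
  assert (Hh1 : 0 < Rabs h) by (apply Rabs_pos_lt; exact Hh0).
  apply Rle_lt_trans with (Cmod k * (eps / (2 * K) * (Rabs h * Cmod d)) * / Rabs h).
  { apply Rmult_le_compat_r; [left; apply Rinv_0_lt_compat; lra|].
    eapply Rle_trans; [apply re_le_Cmod|]. rewrite Cmod_mult.
    apply Rmult_le_compat_l; [apply Cmod_ge_0 | exact Hw]. }
  replace (Cmod k * (eps / (2 * K) * (Rabs h * Cmod d)) * / Rabs h)
    with (eps / 2 * (Cmod k * Cmod d / K)) by (unfold K; field; lra).
  assert (Cmod k * Cmod d / K < 1).
  { unfold K. apply (Rmult_lt_reg_r ((Cmod k + 1) * (Cmod d + 1))); [nra|].
    field_simplify; nra. }
  assert (0 <= Cmod k * Cmod d / K)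
    by (apply Rmult_le_pos; [nra | left; apply Rinv_0_lt_compat; lra]).
  nra.
Qed.

Lemma derivable_pt_lim_Re_axis (f : C -> C) (k l : C) (y : R) :
  is_derive f (0, y) l -> derivable_pt_lim (fun t => Re (k * f (0, t))%C) y (Re (k * (Ci * l))%C).
Proof.
  intros H.
  assert (Hline : forall s : R, (RtoC 0 + RtoC s * Ci)%C = (0, s))
    by (intros; apply injective_projections; simpl; ring).
  apply (derivable_pt_lim_ext (fun t => Re (k * f (RtoC 0 + RtoC t * Ci)%C)%C));
    [intros t; now rewrite Hline|].
  apply derivable_pt_lim_Re_line. rewrite Hline. exact H.
Qed.

Lemma Cmod_sub_le_deriv_bound (f df : C -> C) (D : C -> Prop) (M : R) (z0 z1 : C) :
  (forall z, D z -> is_derive f z (df z)) ->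
  (forall z, D z -> Cmod (df z) <= M) ->
  (forall t, 0 <= t <= 1 -> D (z0 + RtoC t * (z1 - z0))%C) ->
  Cmod (f z1 - f z0) <= M * Cmod (z1 - z0).
Proof.
  intros Hd Hb Hseg.
  set (c := (f z1 - f z0)%C). set (d := (z1 - z0)%C).
  (* Mean value theorem for the real function [s |-> Re (conj c * f (z0 + s d))]. *)
  destruct (MVT_cor2 (fun s => Re (Cconj c * f (z0 + RtoC s * d))%C)
              (fun s => Re (Cconj c * (d * df (z0 + RtoC s * d)%C))%C) 0 1)
    as [tau [Htau Htau01]]; [lra | intros s Hs; apply derivable_pt_lim_Re_line, Hd, Hseg, Hs|].
  replace (z0 + RtoC 1 * d)%C with z1 in Htau by (unfold d; ring).
  replace (z0 + RtoC 0 * d)%C with z0 in Htau by ring.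
  rewrite <- re_minus, Rminus_0_r, Rmult_1_r in Htau.
  replace (Cconj c * f z1 - Cconj c * f z0)%C with (c * Cconj c)%C in Htau by (unfold c; ring).
  rewrite <- Cmod2_conj in Htau.
  assert (Hle : Cmod c ^ 2 <= Cmod c * (Cmod d * M)).
  { change (Cmod c ^ 2) with (Re (RtoC (Cmod c ^ 2))). rewrite Htau.
    eapply Rle_trans; [apply Rle_abs|]. eapply Rle_trans; [apply re_le_Cmod|].
    rewrite !Cmod_mult, Cmod_conj.
    apply Rmult_le_compat_l; [apply Cmod_ge_0|]. apply Rmult_le_compat_l; [apply Cmod_ge_0|].
    apply Hb, Hseg. lra. }
  pose proof (Cmod_ge_0 c). pose proof (Cmod_ge_0 d).
  assert (HM : 0 <= M) by (eapply Rle_trans; [apply Cmod_ge_0 | apply Hb, (Hseg 0); lra]).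
  fold c d. simpl in Hle.
  destruct (Req_dec (Cmod c) 0) as [E|E]; [rewrite E; nra|]. nra.
Qed.

(** * Contractions of the plane *)

Lemma Cauchy_seq_C_cvg (s : nat -> C) :
  (forall eps : posreal, exists N, forall m n, (N <= m)%nat -> (N <= n)%nat ->
     Cmod (s n - s m) < eps) ->
  exists l, forall eps : posreal, exists N, forall n, (N <= n)%nat -> Cmod (s n - l) < eps.
Proof.
  intros H.
  destruct (proj1 (filterlim_locally_cauchy (U := C_CompleteNormedModule) (F := eventually) s))
    as [l Hl].
  { intros eps. destruct (H eps) as [N HN]. exists (fun n => (N <= n)%nat).
    split; [exists N; auto|]. intros m n Hm Hn.
    apply (@norm_compat1 C_AbsRing C_NormedModule). apply HN; auto. }
  exists l. intros eps.
  pose proof (@norm_factor_gt_0 C_AbsRing C_NormedModule) as Hnf.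
  assert (He : 0 < eps / @norm_factor C_AbsRing C_NormedModule)
    by (apply Rdiv_lt_0_compat; [apply cond_pos | exact Hnf]).
  destruct (Hl _ (locally_ball l (mkposreal _ He))) as [N HN].
  exists N. intros n Hn.
  pose proof (@norm_compat2 C_AbsRing C_NormedModule l (s n) (mkposreal _ He) (HN n Hn)) as Hb.
  simpl in Hb. rewrite Rmult_div_assoc, Rmult_div_r in Hb by lra. exact Hb.
Qed.

Section Contraction.

Variables (T : C -> C) (k : R).
Hypothesis Hk : 0 <= k < 1.
Hypothesis HT : forall u v, Cmod (T u - T v) <= k * Cmod (u - v).

Lemma contraction_fixed_point_unique (u w : C) : T u = u -> T w = w -> u = w.
Proof.
  intros Hu Hw. pose proof (HT u w) as H. rewrite Hu, Hw in H.
  pose proof (Cmod_ge_0 (u - w)).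
  assert (E : Cmod (u - w) = 0) by nra. apply Cmod_eq_0 in E.
  replace u with ((u - w) + w)%C by ring. rewrite E. ring.
Qed.

Let orbit (n : nat) : C := Nat.iter n T 0%C.
Let first_step := Cmod (orbit 1 - orbit 0).

Lemma contraction_orbit_step (n : nat) : Cmod (orbit (S n) - orbit n) <= first_step * k ^ n.
Proof.
  induction n as [|n IH]; [rewrite pow_O, Rmult_1_r; apply Rle_refl|].
  change (Cmod (T (orbit (S n)) - T (orbit n)) <= first_step * (k * k ^ n)).
  eapply Rle_trans; [apply HT|].
  replace (first_step * (k * k ^ n)) with (k * (first_step * k ^ n)) by ring.
  apply Rmult_le_compat_l; [lra | exact IH].
Qed.

Lemma contraction_orbit_dist (n p : nat) :
  Cmod (orbit (n + p) - orbit n) <= first_step * k ^ n / (1 - k).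
Proof.
  assert (HD : 0 <= first_step) by apply Cmod_ge_0.
  assert (Hgeom : Cmod (orbit (n + p) - orbit n) <= first_step * (k ^ n - k ^ (n + p)) / (1 - k)).
  { induction p as [|p IH].
    - rewrite Nat.add_0_r, Rminus_diag, Rmult_0_r, Rdiv_0_l.
      unfold Cminus. rewrite Cplus_opp_r, Cmod_0. lra.
    - replace (n + S p)%nat with (S (n + p)) by lia.
      replace (orbit (S (n + p)) - orbit n)%C
        with ((orbit (S (n + p)) - orbit (n + p)) + (orbit (n + p) - orbit n))%C by ring.
      eapply Rle_trans; [apply Cmod_triangle|].
      pose proof (contraction_orbit_step (n + p)).
      replace (first_step * (k ^ n - k ^ S (n + p)) / (1 - k))
        with (first_step * k ^ (n + p) + first_step * (k ^ n - k ^ (n + p)) / (1 - k))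
        by (simpl; field; lra).
      lra. }
  eapply Rle_trans; [exact Hgeom|]. unfold Rdiv. apply Rmult_le_compat_r.
  - left. apply Rinv_0_lt_compat. lra.
  - pose proof (pow_le k (n + p) ltac:(lra)). nra.
Qed.

Lemma contraction_fixed_point : exists w, T w = w.
Proof.
  assert (HD : 0 <= first_step) by apply Cmod_ge_0.
  destruct (Cauchy_seq_C_cvg orbit) as [l Hl].
  { intros eps.
    destruct (pow_lt_1_zero k ltac:(rewrite Rabs_right; lra) (eps * (1 - k) / (first_step + 1)))
      as [N HN]; [apply Rdiv_lt_0_compat; [apply Rmult_lt_0_compat; [apply cond_pos|]|]; lra|].
    assert (Hsmall : forall m n, (N <= m <= n)%nat -> Cmod (orbit n - orbit m) < eps).
    { intros m n Hmn. replace n with (m + (n - m))%nat by lia.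
      eapply Rle_lt_trans; [apply contraction_orbit_dist|].
      specialize (HN m ltac:(lia)). rewrite Rabs_right in HN by (apply Rle_ge, pow_le; lra).
      pose proof (pow_le k m ltac:(lra)). pose proof (cond_pos eps).
      apply Rmult_lt_compat_r with (r := first_step + 1) in HN; [|lra].
      unfold Rdiv in *. rewrite Rmult_assoc, Rinv_l, Rmult_1_r in HN by lra.
      apply Rmult_lt_reg_r with (1 - k); [lra|].
      rewrite Rmult_assoc, Rinv_l, Rmult_1_r by lra. nra. }
    exists N. intros m n Hm Hn. destruct (Nat.le_ge_cases m n).
    - apply Hsmall. lia.
    - rewrite <- Cmod_opp, Copp_minus_distr. apply Hsmall. lia. }
  exists l.
  destruct (Req_dec (Cmod (T l - l)) 0) as [E|E].
  { apply Cmod_eq_0 in E. replace (T l) with ((T l - l) + l)%C by ring. rewrite E. ring. }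
  exfalso.
  assert (He : 0 < Cmod (T l - l) / 2) by (pose proof (Cmod_ge_0 (T l - l)); lra).
  destruct (Hl (mkposreal _ He)) as [N HN]. simpl in HN.
  pose proof (HN N (Nat.le_refl N)) as H1. pose proof (HN (S N) ltac:(lia)) as H2.
  change (orbit (S N)) with (T (orbit N)) in H2.
  assert (Hfix : Cmod (T l - l) <= k * Cmod (orbit N - l) + Cmod (T (orbit N) - l)).
  { replace (T l - l)%C with ((T l - T (orbit N)) + (T (orbit N) - l))%C by ring.
    eapply Rle_trans; [apply Cmod_triangle|]. apply Rplus_le_compat_r.
    rewrite <- Cmod_opp, Copp_minus_distr. eapply Rle_trans; [apply HT|].
    rewrite <- Cmod_opp, Copp_minus_distr. lra. }
  pose proof (Cmod_ge_0 (orbit N - l)).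
  assert (k * Cmod (orbit N - l) <= Cmod (orbit N - l)) by nra.
  lra.
Qed.

End Contraction.

(** * A harmonic function on the slit plane *)

Definition off_slit (x y : R) : Prop := y <> 0 \/ 0 < x.

Definition hypot (x y : R) : R := sqrt (x * x + y * y).

Definition re_sqrt (x y : R) : R := sqrt ((hypot x y + x) / 2).

Definition re_sqrt_dx (x y : R) : R := (x / hypot x y + 1) / (4 * re_sqrt x y).
Definition re_sqrt_dy (x y : R) : R := (y / hypot x y) / (4 * re_sqrt x y).

(* The second partials are written in the shape [auto_derive] produces, so that
   [re_sqrt_derive] closes with [field]. *)
Definition re_sqrt_dxx (x y : R) : R :=
  (((hypot x y - x * (x / hypot x y)) / (hypot x y * hypot x y)) * (4 * re_sqrt x y)
   - (x / hypot x y + 1) * (4 * re_sqrt_dx x y)) / ((4 * re_sqrt x y) * (4 * re_sqrt x y)).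
Definition re_sqrt_dxy (x y : R) : R :=
  ((- (x * (y / hypot x y)) / (hypot x y * hypot x y)) * (4 * re_sqrt x y)
   - (x / hypot x y + 1) * (4 * re_sqrt_dy x y)) / ((4 * re_sqrt x y) * (4 * re_sqrt x y)).
Definition re_sqrt_dyx (x y : R) : R :=
  ((- (y * (x / hypot x y)) / (hypot x y * hypot x y)) * (4 * re_sqrt x y)
   - (y / hypot x y) * (4 * re_sqrt_dx x y)) / ((4 * re_sqrt x y) * (4 * re_sqrt x y)).
Definition re_sqrt_dyy (x y : R) : R :=
  (((hypot x y - y * (y / hypot x y)) / (hypot x y * hypot x y)) * (4 * re_sqrt x y)
   - (y / hypot x y) * (4 * re_sqrt_dy x y)) / ((4 * re_sqrt x y) * (4 * re_sqrt x y)).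

Lemma hypot_sqr (x y : R) : hypot x y * hypot x y = x * x + y * y.
Proof. apply sqrt_sqrt. nra. Qed.

Lemma hypot_ge (x y : R) : Rabs x <= hypot x y /\ Rabs y <= hypot x y.
Proof.
  unfold hypot. split; rewrite <- sqrt_Rsqr_abs; apply sqrt_le_1_alt; unfold Rsqr; nra.
Qed.

Lemma hypot_arg_pos (x y : R) : off_slit x y -> 0 < x * x + y * y.
Proof. intros [H|H]; [assert (0 < y * y) by (apply Rsqr_pos_lt, H) |]; nra. Qed.

Lemma hypot_pos (x y : R) : off_slit x y -> 0 < hypot x y.
Proof. intros H. apply sqrt_lt_R0, hypot_arg_pos, H. Qed.

Lemma hypot_add_pos (x y : R) : off_slit x y -> 0 < hypot x y + x.
Proof.
  intros H. pose proof (hypot_pos x y H). destruct (hypot_ge x y) as [Hx _].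
  destruct (Rlt_or_le 0 x); [lra|].
  destruct H as [H|H]; [|lra].
  assert (0 < y * y) by (apply Rsqr_pos_lt, H).
  pose proof (hypot_sqr x y). rewrite Rabs_left1 in Hx by lra. nra.
Qed.

Lemma re_sqrt_pos (x y : R) : off_slit x y -> 0 < re_sqrt x y.
Proof. intros H. apply sqrt_lt_R0. pose proof (hypot_add_pos x y H). lra. Qed.

Lemma re_sqrt_sqr (x y : R) : off_slit x y -> re_sqrt x y * re_sqrt x y = (hypot x y + x) / 2.
Proof. intros H. apply sqrt_sqrt. pose proof (hypot_add_pos x y H). lra. Qed.

Ltac re_sqrt_derive H :=
  let x := match type of H with off_slit ?x _ => x end in
  let y := match type of H with off_slit _ ?y => y end in
  pose proof (hypot_arg_pos x y H); pose proof (hypot_pos x y H);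
  pose proof (hypot_add_pos x y H); pose proof (re_sqrt_pos x y H);
  unfold re_sqrt_dxx, re_sqrt_dxy, re_sqrt_dyx, re_sqrt_dyy, re_sqrt_dx, re_sqrt_dy, re_sqrt,
    hypot in *;
  unfold Rdiv in *; auto_derive;
  [ repeat split; try assumption; try lra; try (apply Rgt_not_eq; nra)
  | field; repeat split; apply Rgt_not_eq; nra ].

Lemma is_derive_re_sqrt_x (x y : R) :
  off_slit x y -> is_derive (fun t => re_sqrt t y) x (re_sqrt_dx x y).
Proof. intros H. re_sqrt_derive H. Qed.

Lemma is_derive_re_sqrt_y (x y : R) :
  off_slit x y -> is_derive (fun t => re_sqrt x t) y (re_sqrt_dy x y).
Proof. intros H. re_sqrt_derive H. Qed.

Lemma is_derive_re_sqrt_dx_x (x y : R) :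
  off_slit x y -> is_derive (fun t => re_sqrt_dx t y) x (re_sqrt_dxx x y).
Proof. intros H. re_sqrt_derive H. Qed.

Lemma is_derive_re_sqrt_dx_y (x y : R) :
  off_slit x y -> is_derive (fun t => re_sqrt_dx x t) y (re_sqrt_dxy x y).
Proof. intros H. re_sqrt_derive H. Qed.

Lemma is_derive_re_sqrt_dy_x (x y : R) :
  off_slit x y -> is_derive (fun t => re_sqrt_dy t y) x (re_sqrt_dyx x y).
Proof. intros H. re_sqrt_derive H. Qed.

Lemma is_derive_re_sqrt_dy_y (x y : R) :
  off_slit x y -> is_derive (fun t => re_sqrt_dy x t) y (re_sqrt_dyy x y).
Proof. intros H. re_sqrt_derive H. Qed.

Lemma re_sqrt_laplacian (x y : R) : off_slit x y -> re_sqrt_dxx x y + re_sqrt_dyy x y = 0.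
Proof.
  intros H. pose proof (hypot_pos x y H) as Hr. pose proof (re_sqrt_pos x y H) as Hf.
  pose proof (hypot_sqr x y) as Er. pose proof (re_sqrt_sqr x y H) as Ef.
  unfold re_sqrt_dxx, re_sqrt_dyy, re_sqrt_dx, re_sqrt_dy.
  set (r := hypot x y) in *. set (f := re_sqrt x y) in *.
  replace ((((r - x * (x / r)) / (r * r)) * (4 * f) - (x / r + 1) * (4 * ((x / r + 1) / (4 * f))))
            / ((4 * f) * (4 * f))
           + (((r - y * (y / r)) / (r * r)) * (4 * f) - (y / r) * (4 * ((y / r) / (4 * f))))
            / ((4 * f) * (4 * f)))
    with (((2 * (r * r) - (x * x + y * y)) * (4 * (f * f))
           - r * ((x * x + y * y) + 2 * x * r + r * r)) / (16 * (f * f * f) * (r * r * r)))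
    by (field; split; lra).
  rewrite <- Er, Ef.
  replace ((2 * (r * r) - r * r) * (4 * ((r + x) / 2)) - r * (r * r + 2 * x * r + r * r))
    with 0 by field.
  unfold Rdiv. ring.
Qed.

Lemma continuity_2d_pt_hypot (x y : R) : continuity_2d_pt hypot x y.
Proof.
  unfold hypot. apply continuity_1d_2d_pt_comp; [apply continuity_pt_sqrt; nra|].
  apply continuity_2d_pt_plus; apply continuity_2d_pt_mult;
    auto using continuity_2d_pt_id1, continuity_2d_pt_id2.
Qed.

Lemma continuity_2d_pt_re_sqrt (x y : R) : off_slit x y -> continuity_2d_pt re_sqrt x y.
Proof.
  intros H. unfold re_sqrt. pose proof (hypot_add_pos x y H).
  apply continuity_1d_2d_pt_comp; [apply continuity_pt_sqrt; lra|].
  apply continuity_2d_pt_mult; [|apply continuity_2d_pt_const].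
  apply continuity_2d_pt_plus; [apply continuity_2d_pt_hypot | apply continuity_2d_pt_id1].
Qed.

Lemma continuity_2d_pt_re_sqrt_partials (x y : R) : off_slit x y ->
  continuity_2d_pt re_sqrt_dx x y /\ continuity_2d_pt re_sqrt_dy x y /\
  continuity_2d_pt re_sqrt_dxx x y /\ continuity_2d_pt re_sqrt_dxy x y /\
  continuity_2d_pt re_sqrt_dyx x y /\ continuity_2d_pt re_sqrt_dyy x y.
Proof.
  intros H. pose proof (hypot_pos x y H). pose proof (re_sqrt_pos x y H).
  unfold re_sqrt_dxx, re_sqrt_dxy, re_sqrt_dyx, re_sqrt_dyy, re_sqrt_dx, re_sqrt_dy, Rdiv.
  repeat split;
  repeat first
    [ apply continuity_2d_pt_const
    | apply continuity_2d_pt_id1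
    | apply continuity_2d_pt_id2
    | apply continuity_2d_pt_hypot
    | apply continuity_2d_pt_re_sqrt; exact H
    | apply continuity_2d_pt_plus
    | apply continuity_2d_pt_minus
    | apply continuity_2d_pt_opp
    | apply continuity_2d_pt_inv; [| apply Rgt_not_eq; nra]
    | apply continuity_2d_pt_mult ].
Qed.

Section HarmonicOfPartials.

Variables (D : R -> R -> Prop) (U Ux Uy Uxx Uxy Uyx Uyy : R -> R -> R).
Hypothesis D_open : forall x y, D x y ->
  exists d, 0 < d /\ forall x' y', Rabs (x' - x) < d -> Rabs (y' - y) < d -> D x' y'.
Hypothesis U_derive : forall x y, D x y ->
  is_derive (fun t => U t y) x (Ux x y) /\ is_derive (fun t => U x t) y (Uy x y) /\
  is_derive (fun t => Ux t y) x (Uxx x y) /\ is_derive (fun t => Ux x t) y (Uxy x y) /\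
  is_derive (fun t => Uy t y) x (Uyx x y) /\ is_derive (fun t => Uy x t) y (Uyy x y).
Hypothesis U_continuous : forall x y, D x y ->
  continuity_2d_pt U x y /\ continuity_2d_pt Ux x y /\ continuity_2d_pt Uy x y /\
  continuity_2d_pt Uxx x y /\ continuity_2d_pt Uxy x y /\
  continuity_2d_pt Uyx x y /\ continuity_2d_pt Uyy x y.
Hypothesis U_laplacian : forall x y, D x y -> Uxx x y + Uyy x y = 0.

Let u (z : C) : R := U (Re z) (Im z).

Lemma locally_D_x (x y : R) : D x y -> locally x (fun t => D t y).
Proof.
  intros H. destruct (D_open x y H) as [d [Hd HD]]. exists (mkposreal d Hd).
  intros t Ht. apply HD; [exact Ht | rewrite Rminus_diag, Rabs_R0; exact Hd].
Qed.

Lemma locally_D_y (x y : R) : D x y -> locally y (fun t => D x t).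
Proof.
  intros H. destruct (D_open x y H) as [d [Hd HD]]. exists (mkposreal d Hd).
  intros t Ht. apply HD; [rewrite Rminus_diag, Rabs_R0; exact Hd | exact Ht].
Qed.

Lemma dx_u (x y : R) : D x y -> dx u (x, y) = Ux x y.
Proof. intros H. apply is_derive_unique, U_derive, H. Qed.

Lemma dy_u (x y : R) : D x y -> dy u (x, y) = Uy x y.
Proof. intros H. apply is_derive_unique, U_derive, H. Qed.

Lemma partials_u (x y : R) : D x y ->
  is_derive (fun t => dx u (t, y)) x (Uxx x y) /\ is_derive (fun t => dx u (x, t)) y (Uxy x y) /\
  is_derive (fun t => dy u (t, y)) x (Uyx x y) /\ is_derive (fun t => dy u (x, t)) y (Uyy x y).
Proof.
  intros H. destruct (U_derive x y H) as (_ & _ & H1 & H2 & H3 & H4).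
  pose proof (locally_D_x x y H) as Lx. pose proof (locally_D_y x y H) as Ly.
  split; [|split; [|split]].
  - apply (is_derive_ext_loc (fun t => Ux t y)); [|exact H1].
    apply (filter_imp _ _ (fun t Ht => eq_sym (dx_u t y Ht)) Lx).
  - apply (is_derive_ext_loc (fun t => Ux x t)); [|exact H2].
    apply (filter_imp _ _ (fun t Ht => eq_sym (dx_u x t Ht)) Ly).
  - apply (is_derive_ext_loc (fun t => Uy t y)); [|exact H3].
    apply (filter_imp _ _ (fun t Ht => eq_sym (dy_u t y Ht)) Lx).
  - apply (is_derive_ext_loc (fun t => Uy x t)); [|exact H4].
    apply (filter_imp _ _ (fun t Ht => eq_sym (dy_u x t Ht)) Ly).
Qed.

Lemma cont_at_of_continuity_2d_pt (g : C -> R) (Phi : R -> R -> R) (z : C) :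
  D (Re z) (Im z) -> (forall x y, D x y -> g (x, y) = Phi x y) ->
  continuity_2d_pt Phi (Re z) (Im z) -> cont_at g z.
Proof.
  intros Hz E Hc eps. destruct (D_open _ _ Hz) as [d0 [Hd0 HD]]. destruct (Hc eps) as [d1 Hd1].
  assert (Hm : 0 < Rmin d0 d1) by (apply Rmin_pos; [lra | apply cond_pos]).
  exists (mkposreal _ Hm). intros w Hw. simpl in Hw. apply Rmin_Rgt in Hw as [Hw0 Hw1].
  pose proof (re_le_Cmod (w - z)). pose proof (im_le_Cmod (w - z)).
  rewrite re_minus in H. rewrite im_minus in H0.
  destruct w as [x' y'], z as [x y]. simpl in *.
  rewrite !E by (auto || (apply HD; lra)). apply Hd1; lra.
Qed.

Lemma harmonic_on_of_partials : harmonic_on (fun z => D (Re z) (Im z)) u.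
Proof.
  intros [x y] H. simpl in H.
  destruct (U_derive x y H) as (Hx & Hy & _).
  destruct (partials_u x y H) as (Hxx & Hxy & Hyx & Hyy).
  destruct (U_continuous x y H) as (C0 & Cx & Cy & Cxx & Cxy & Cyx & Cyy).
  cbn [Re Im fst snd].
  assert (Ex : forall x y, D x y -> dx (dx u) (x, y) = Uxx x y)
    by (intros; apply is_derive_unique, partials_u; auto).
  assert (Ey : forall x y, D x y -> dy (dy u) (x, y) = Uyy x y)
    by (intros; apply is_derive_unique, partials_u; auto).
  assert (Exy : forall x y, D x y -> dy (dx u) (x, y) = Uxy x y)
    by (intros; apply is_derive_unique, partials_u; auto).
  assert (Eyx : forall x y, D x y -> dx (dy u) (x, y) = Uyx x y)
    by (intros; apply is_derive_unique, partials_u; auto).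
  split; [eexists; exact Hx|]. split; [eexists; exact Hy|].
  split; [eexists; exact Hxx|]. split; [eexists; exact Hxy|].
  split; [eexists; exact Hyx|]. split; [eexists; exact Hyy|].
  split; [apply (cont_at_of_continuity_2d_pt _ U); auto|].
  split; [apply (cont_at_of_continuity_2d_pt _ Ux); auto using dx_u|].
  split; [apply (cont_at_of_continuity_2d_pt _ Uy); auto using dy_u|].
  split; [apply (cont_at_of_continuity_2d_pt _ Uxx); auto|].
  split; [apply (cont_at_of_continuity_2d_pt _ Uxy); auto|].
  split; [apply (cont_at_of_continuity_2d_pt _ Uyx); auto|].
  split; [apply (cont_at_of_continuity_2d_pt _ Uyy); auto|].
  rewrite Ex, Ey by exact H. apply U_laplacian, H.
Qed.

End HarmonicOfPartials.

Lemma is_derive_shift (f : R -> R) (x M l : R) :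
  is_derive f (x + M) l -> is_derive (fun t => f (t + M)) x l.
Proof.
  intros H. apply is_derive_Reals. apply is_derive_Reals in H.
  replace l with (l * 1) by ring.
  apply (derivable_pt_lim_comp (fun t => t + M) f); [|exact H].
  replace 1 with (1 + 0) by ring. apply derivable_pt_lim_plus;
    [apply derivable_pt_lim_id | apply derivable_pt_lim_const].
Qed.

Lemma continuity_2d_pt_scal_shift (f : R -> R -> R) (K M x y : R) :
  continuity_2d_pt f (x + M) y -> continuity_2d_pt (fun x y => K * f (x + M) y) x y.
Proof.
  intros Hf. apply continuity_2d_pt_mult; [apply continuity_2d_pt_const|].
  intros eps. destruct (Hf eps) as [d Hd]. exists d. intros u v Hu Hv.
  apply Hd; [replace (u + M - (x + M)) with (u - x) by ring|]; assumption.
Qed.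

Lemma off_slit_open (x y : R) : off_slit x y ->
  exists d, 0 < d /\ forall x' y', Rabs (x' - x) < d -> Rabs (y' - y) < d -> off_slit x' y'.
Proof.
  intros [H|H].
  - exists (Rabs y). split; [apply Rabs_pos_lt, H|]. intros x' y' _ Hy. left. intros E.
    subst y'. rewrite Rminus_0_l, Rabs_Ropp in Hy. lra.
  - exists x. split; [exact H|]. intros x' y' Hx _. right.
    pose proof (Rle_abs (x - x')). rewrite <- Rabs_Ropp, Ropp_minus_distr in H0. lra.
Qed.

Lemma harmonic_on_re_sqrt_shift (M K : R) :
  harmonic_on (fun z => off_slit (Re z + M) (Im z)) (fun z => K * re_sqrt (Re z + M) (Im z)).
Proof.
  refine (harmonic_on_of_partials (fun x y => off_slit (x + M) y)
    (fun x y => K * re_sqrt (x + M) y) (fun x y => K * re_sqrt_dx (x + M) y)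
    (fun x y => K * re_sqrt_dy (x + M) y) (fun x y => K * re_sqrt_dxx (x + M) y)
    (fun x y => K * re_sqrt_dxy (x + M) y) (fun x y => K * re_sqrt_dyx (x + M) y)
    (fun x y => K * re_sqrt_dyy (x + M) y) _ _ _ _); cbv beta.
  - intros x y H. destruct (off_slit_open _ _ H) as [d [Hd HD]].
    exists d. split; [exact Hd|]. intros x' y' Hx Hy. apply HD; [|exact Hy].
    replace (x' + M - (x + M)) with (x' - x) by ring. exact Hx.
  - intros x y H.
    split; [|split; [|split; [|split; [|split]]]]; apply is_derive_scal.
    + apply (is_derive_shift (fun s => re_sqrt s y)), is_derive_re_sqrt_x, H.
    + apply is_derive_re_sqrt_y, H.
    + apply (is_derive_shift (fun s => re_sqrt_dx s y)), is_derive_re_sqrt_dx_x, H.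
    + apply is_derive_re_sqrt_dx_y, H.
    + apply (is_derive_shift (fun s => re_sqrt_dy s y)), is_derive_re_sqrt_dy_x, H.
    + apply is_derive_re_sqrt_dy_y, H.
  - intros x y H. pose proof (continuity_2d_pt_re_sqrt _ _ H) as C0.
    destruct (continuity_2d_pt_re_sqrt_partials _ _ H) as (C1 & C2 & C3 & C4 & C5 & C6).
    split; [|split; [|split; [|split; [|split; [|split]]]]].
    + exact (continuity_2d_pt_scal_shift re_sqrt K M x y C0).
    + exact (continuity_2d_pt_scal_shift re_sqrt_dx K M x y C1).
    + exact (continuity_2d_pt_scal_shift re_sqrt_dy K M x y C2).
    + exact (continuity_2d_pt_scal_shift re_sqrt_dxx K M x y C3).
    + exact (continuity_2d_pt_scal_shift re_sqrt_dxy K M x y C4).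
    + exact (continuity_2d_pt_scal_shift re_sqrt_dyx K M x y C5).
    + exact (continuity_2d_pt_scal_shift re_sqrt_dyy K M x y C6).
  - intros x y H. rewrite <- Rmult_plus_distr_l, re_sqrt_laplacian by exact H. ring.
Qed.

Lemma sqrt_le_3_re_sqrt (x y : R) : 1 - Rabs y / 2 < x -> sqrt (3 + 2 * Rabs y) <= 3 * re_sqrt x y.
Proof.
  intros Hx. destruct (hypot_ge x y) as [_ Hy].
  pose proof (Rabs_pos y). unfold re_sqrt.
  apply Rle_trans with (sqrt (3 * 3 * ((hypot x y + x) / 2))); [apply sqrt_le_1_alt; lra|].
  rewrite sqrt_mult_alt, sqrt_square by lra. lra.
Qed.

(** * The map eta *)

Definition log_shift (w : C) : C := Clog (w + RtoC 3).

Lemma Re_log_shift_pos (w : C) : -2 < Re w -> 0 < Re (log_shift w).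
Proof.
  intros H. unfold log_shift, Clog; simpl. rewrite <- ln_1. apply ln_increasing; [lra|].
  eapply Rlt_le_trans; [|apply Re_le_Cmod]. rewrite re_plus. simpl. lra.
Qed.

Lemma Re_log_shift_ge_1 (w : C) : 0 <= Re w -> 1 <= Re (log_shift w).
Proof.
  intros H. unfold log_shift, Clog; simpl.
  eapply Rle_trans; [apply ln_3_bounds | apply ln_le; [lra|]].
  eapply Rle_trans; [|apply Re_le_Cmod]. rewrite re_plus. simpl. lra.
Qed.

Lemma is_derive_log_shift (w : C) : -2 < Re w -> is_derive log_shift w (/ (w + RtoC 3))%C.
Proof.
  intros H. unfold log_shift.
  replace (/ (w + RtoC 3))%C with ((1 + 0) * / (w + RtoC 3))%C by ring.
  apply (is_derive_C_comp Clog (fun w => w + RtoC 3)%C).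
  - apply is_derive_Clog. rewrite re_plus. simpl. lra.
  - apply is_derive_C_plus; [apply is_derive_C_id | apply is_derive_C_const].
Qed.

Section LogPower.

Variable a : R.
Hypothesis Ha : 0 < a < 1.

Definition log_pow (w : C) : C := Cexp (RtoC a * Clog (log_shift w)).

Definition log_pow_deriv (w : C) : C :=
  (RtoC a * (/ (w + RtoC 3) * / log_shift w) * log_pow w)%C.

Lemma is_derive_log_pow (w : C) : -2 < Re w -> is_derive log_pow w (log_pow_deriv w).
Proof.
  intros H. unfold log_pow, log_pow_deriv.
  apply (is_derive_C_comp Cexp (fun w => RtoC a * Clog (log_shift w))%C); [apply is_derive_Cexp|].
  apply is_derive_C_scal, (is_derive_C_comp Clog log_shift).
  - apply is_derive_Clog, Re_log_shift_pos, H.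
  - apply is_derive_log_shift, H.
Qed.

Lemma eta_eq (w : C) : -2 < Re w -> eta a w = (w - log_pow w)%C.
Proof.
  intros H. unfold eta, Defs.Cpow. fold (log_shift w).
  destruct (Req_EM_T (Cmod (log_shift w)) 0) as [E|_]; [|reflexivity].
  pose proof (Cmod_pos_of_Re_pos _ (Re_log_shift_pos w H)). lra.
Qed.

Lemma Cmod_log_pow (w : C) : Cmod (log_pow w) = Rpower (Cmod (log_shift w)) a.
Proof. unfold log_pow. rewrite Cmod_Cexp, re_scal_l. reflexivity. Qed.

Lemma Cmod_log_pow_deriv_le (w : C) : 0 <= Re w -> Cmod (log_pow_deriv w) <= 1/3.
Proof.
  intros H. unfold log_pow_deriv.
  assert (H3 : 3 <= Cmod (w + RtoC 3))
    by (eapply Rle_trans; [|apply Re_le_Cmod]; rewrite re_plus; simpl; lra).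
  assert (HL : 1 <= Cmod (log_shift w))
    by (eapply Rle_trans; [apply Re_log_shift_ge_1, H | apply Re_le_Cmod]).
  rewrite !Cmod_mult, !Cmod_inv, Cmod_log_pow, Cmod_R, Rabs_right by
    (lra || (apply Cmod_gt_0; lra)).
  pose proof (Rpower_le_self (Cmod (log_shift w)) a HL ltac:(lra)).
  pose proof (Rpower_pos (Cmod (log_shift w)) a).
  assert (/ Cmod (w + RtoC 3) <= / 3) by (apply Rinv_le_contravar; lra).
  assert (0 < / Cmod (w + RtoC 3)) by (apply Rinv_0_lt_compat; lra).
  assert (Rpower (Cmod (log_shift w)) a * / Cmod (log_shift w) <= 1)
    by (apply (Rmult_le_reg_r (Cmod (log_shift w))); [lra|];
        rewrite Rmult_assoc, Rinv_l by lra; lra).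
  assert (0 < / Cmod (log_shift w)) by (apply Rinv_0_lt_compat; lra).
  replace (a * (/ Cmod (w + RtoC 3) * / Cmod (log_shift w)) * Rpower (Cmod (log_shift w)) a)
    with (a * / Cmod (w + RtoC 3) * (Rpower (Cmod (log_shift w)) a * / Cmod (log_shift w)))
    by ring.
  assert (0 <= a * / Cmod (w + RtoC 3) <= 1/3) by (split; nra).
  nra.
Qed.

Lemma log_pow_lipschitz (z0 z1 : C) : 0 <= Re z0 -> 0 <= Re z1 ->
  Cmod (log_pow z1 - log_pow z0) <= 1/3 * Cmod (z1 - z0).
Proof.
  intros H0 H1.
  apply (Cmod_sub_le_deriv_bound log_pow log_pow_deriv (fun z => 0 <= Re z)).
  - intros z Hz. apply is_derive_log_pow. lra.
  - exact Cmod_log_pow_deriv_le.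
  - intros t Ht. rewrite re_plus, re_scal_l, re_minus. nra.
Qed.

Lemma is_derive_eta (z : C) : -2 < Re z -> is_derive (eta a) z (1 - log_pow_deriv z)%C.
Proof.
  intros Hz.
  apply (is_derive_ext_loc (fun w => w - log_pow w)%C).
  - assert (Hr : 0 < Re z + 2) by lra. exists (mkposreal _ Hr). intros w Hw.
    change (Cmod (w - z) < Re z + 2) in Hw.
    pose proof (Re_ge_sub_Cmod z w). symmetry. apply eta_eq. lra.
  - apply is_derive_C_minus; [apply is_derive_C_id | apply is_derive_log_pow, Hz].
Qed.

Lemma eta_univalent : univalent_on Cplus_half (eta a).
Proof.
  split.
  - intros z Hz. exists (1 - log_pow_deriv z)%C. apply is_derive_eta. unfold Cplus_half in Hz. lra.
  - intros z w Hz Hw E. unfold Cplus_half in *.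
    rewrite !eta_eq in E by lra.
    pose proof (log_pow_lipschitz w z ltac:(lra) ltac:(lra)) as H.
    replace (log_pow z - log_pow w)%C with (z - w)%C in H.
    2:{ replace (z - w)%C with ((z - log_pow z) - (w - log_pow w) + (log_pow z - log_pow w))%C
          by ring. rewrite E. ring. }
    pose proof (Cmod_ge_0 (z - w)).
    assert (E0 : Cmod (z - w) = 0) by lra. apply Cmod_eq_0 in E0.
    replace z with ((z - w) + w)%C by ring. rewrite E0. ring.
Qed.

Lemma log_pow_real (x : R) : 0 <= x -> log_pow (RtoC x) = RtoC (Rpower (ln (x + 3)) a).
Proof.
  intros Hx. unfold log_pow, log_shift.
  replace (RtoC x + RtoC 3)%C with (RtoC (x + 3)) by (rewrite RtoC_plus; reflexivity).
  rewrite Clog_real by lra.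
  pose proof (ln_3_bounds). assert (ln 3 <= ln (x + 3)) by (apply ln_le; lra).
  rewrite Clog_real, <- RtoC_mult, Cexp_real by lra. reflexivity.
Qed.

(** ** The boundary curve *)

(* [eta] maps the imaginary axis [i y] onto the curve [boundary v + i v], where
   [v = eta_axis_im y]. *)
Definition eta_axis_im (y : R) : R := y - Im (log_pow (0, y)).
Definition eta_axis_im_inv (v : R) : R := epsilon (inhabits 0) (fun y => eta_axis_im y = v).
Definition boundary (v : R) : R := - Re (log_pow (0, eta_axis_im_inv v)).

Lemma Cmod_axis_sub (y1 y2 : R) : Cmod ((0, y1) - (0, y2))%C = Rabs (y1 - y2).
Proof. unfold Cmod; simpl. rewrite <- sqrt_Rsqr_abs. f_equal. unfold Rsqr. ring. Qed.

Lemma log_pow_axis_lipschitz (y1 y2 : R) :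
  Rabs (Re (log_pow (0, y1)) - Re (log_pow (0, y2))) <= 1/3 * Rabs (y1 - y2) /\
  Rabs (Im (log_pow (0, y1)) - Im (log_pow (0, y2))) <= 1/3 * Rabs (y1 - y2).
Proof.
  pose proof (log_pow_lipschitz (0, y2) (0, y1) (Rle_refl _) (Rle_refl _)) as H.
  rewrite Cmod_axis_sub in H.
  pose proof (re_le_Cmod (log_pow (0, y1) - log_pow (0, y2))).
  pose proof (im_le_Cmod (log_pow (0, y1) - log_pow (0, y2))).
  rewrite re_minus in H0. rewrite im_minus in H1. split; lra.
Qed.

Lemma eta_axis_im_expanding (y1 y2 : R) : y2 <= y1 ->
  2/3 * (y1 - y2) <= eta_axis_im y1 - eta_axis_im y2.
Proof.
  intros H. destruct (log_pow_axis_lipschitz y1 y2) as [_ H1]. unfold eta_axis_im.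
  rewrite (Rabs_right (y1 - y2)) in H1 by lra.
  pose proof (Rle_abs (Im (log_pow (0, y1)) - Im (log_pow (0, y2)))). lra.
Qed.

Lemma eta_axis_im_inj (y1 y2 : R) : eta_axis_im y1 = eta_axis_im y2 -> y1 = y2.
Proof.
  intros E. destruct (Rtotal_order y1 y2) as [H|[H|H]]; auto.
  - pose proof (eta_axis_im_expanding y2 y1 ltac:(lra)). lra.
  - pose proof (eta_axis_im_expanding y1 y2 ltac:(lra)). lra.
Qed.

(* A solution of [y = v + Im (log_pow (i y))] is a fixed point of a contraction of the
   imaginary axis. *)
Lemma eta_axis_im_surj (v : R) : exists y, eta_axis_im y = v.
Proof.
  destruct (contraction_fixed_point (fun w => (0, v + Im (log_pow (0, Im w)))) (1/3))
    as [w Hw]; [lra| |].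
  - intros u w. eapply Rle_trans; [|apply Rmult_le_compat_l; [lra | apply im_le_Cmod]].
    replace (Cminus (0, v + Im (log_pow (0, Im u))) (0, v + Im (log_pow (0, Im w))))
      with (Cminus (0, Im (log_pow (0, Im u))) (0, Im (log_pow (0, Im w))))
      by (apply injective_projections; simpl; ring).
    rewrite Cmod_axis_sub, im_minus. apply log_pow_axis_lipschitz.
  - exists (Im w). unfold eta_axis_im.
    assert (E : Im w = v + Im (log_pow (0, Im w))) by (rewrite <- Hw at 1; reflexivity).
    lra.
Qed.

Lemma eta_axis_im_inv_r (v : R) : eta_axis_im (eta_axis_im_inv v) = v.
Proof. unfold eta_axis_im_inv. apply epsilon_spec, eta_axis_im_surj. Qed.

Lemma eta_axis_im_inv_l (y : R) : eta_axis_im_inv (eta_axis_im y) = y.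
Proof. apply eta_axis_im_inj, eta_axis_im_inv_r. Qed.

Lemma eta_axis_im_0 : eta_axis_im 0 = 0.
Proof.
  unfold eta_axis_im. change (0, 0) with (RtoC 0). rewrite log_pow_real by lra. simpl. ring.
Qed.

Lemma Rabs_eta_axis_im_inv_le (v : R) : Rabs (eta_axis_im_inv v) <= 3/2 * Rabs v.
Proof.
  pose proof (eta_axis_im_inv_r v) as E. pose proof eta_axis_im_0 as E0.
  set (y := eta_axis_im_inv v) in *.
  destruct (Rle_dec 0 y).
  - pose proof (eta_axis_im_expanding y 0 r). rewrite E, E0 in H.
    rewrite !Rabs_right by lra. lra.
  - pose proof (eta_axis_im_expanding 0 y ltac:(lra)). rewrite E, E0 in H.
    rewrite Rabs_left, Rabs_left1 by lra. lra.
Qed.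

Lemma derivable_pt_lim_Re_log_pow_axis (y : R) :
  derivable_pt_lim (fun t => Re (log_pow (0, t))) y (- Im (log_pow_deriv (0, y))).
Proof.
  pose proof (derivable_pt_lim_Re_axis log_pow (1, 0) _ y
    (is_derive_log_pow (0, y) ltac:(simpl; lra))) as H.
  replace (- Im (log_pow_deriv (0, y))) with (Re ((1, 0) * (Ci * log_pow_deriv (0, y))))%C
    by (destruct (log_pow_deriv (0, y)); simpl; ring).
  eapply derivable_pt_lim_ext; [|exact H].
  intros t. cbv beta. destruct (log_pow (0, t)); simpl; ring.
Qed.

Lemma derivable_pt_lim_Im_log_pow_axis (y : R) :
  derivable_pt_lim (fun t => Im (log_pow (0, t))) y (Re (log_pow_deriv (0, y))).
Proof.
  pose proof (derivable_pt_lim_Re_axis log_pow (0, -1) _ y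
    (is_derive_log_pow (0, y) ltac:(simpl; lra))) as H.
  replace (Re (log_pow_deriv (0, y))) with (Re ((0, -1) * (Ci * log_pow_deriv (0, y))))%C
    by (destruct (log_pow_deriv (0, y)); simpl; ring).
  eapply derivable_pt_lim_ext; [|exact H].
  intros t. cbv beta. destruct (log_pow (0, t)); simpl; ring.
Qed.

Lemma Rabs_log_pow_deriv_axis_le (y : R) :
  Rabs (Re (log_pow_deriv (0, y))) <= 1/3 /\ Rabs (Im (log_pow_deriv (0, y))) <= 1/3.
Proof.
  pose proof (Cmod_log_pow_deriv_le (0, y) (Rle_refl _)).
  pose proof (re_le_Cmod (log_pow_deriv (0, y))). pose proof (im_le_Cmod (log_pow_deriv (0, y))).
  split; lra.
Qed.

Definition boundary_deriv (v : R) : R :=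
  Im (log_pow_deriv (0, eta_axis_im_inv v)) / (1 - Re (log_pow_deriv (0, eta_axis_im_inv v))).

Lemma derivable_pt_lim_boundary (v : R) : derivable_pt_lim boundary v (boundary_deriv v).
Proof.
  set (y := eta_axis_im_inv v).
  set (l := log_pow_deriv (0, y)).
  destruct (Rabs_log_pow_deriv_axis_le y) as [Hre _]. fold l in Hre.
  pose proof (Rle_abs (Re l)) as Hl.
  assert (HY : derivable_pt_lim eta_axis_im_inv v (/ (1 - Re l))).
  { apply (derivable_pt_lim_inverse eta_axis_im _ (2/3));
      [lra | lra | exact eta_axis_im_inv_r | exact eta_axis_im_expanding |].
    apply derivable_pt_lim_minus;
      [apply derivable_pt_lim_id | apply derivable_pt_lim_Im_log_pow_axis]. }
  pose proof (derivable_pt_lim_comp _ _ v _ _ HY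
    (derivable_pt_lim_opp _ _ _ (derivable_pt_lim_Re_log_pow_axis y))) as Hcomp.
  unfold boundary_deriv. fold y l.
  replace (Im l / (1 - Re l)) with (- - Im l * / (1 - Re l)) by (field; lra).
  exact Hcomp.
Qed.

Lemma Rabs_boundary_deriv_le (v : R) : Rabs (boundary_deriv v) <= 1/2.
Proof.
  unfold boundary_deriv. destruct (Rabs_log_pow_deriv_axis_le (eta_axis_im_inv v)) as [H1 H2].
  set (l := log_pow_deriv (0, eta_axis_im_inv v)) in *.
  pose proof (Rle_abs (Re l)). pose proof (Rle_abs (- Re l)). rewrite Rabs_Ropp in *.
  rewrite Rabs_div, (Rabs_right (1 - Re l)) by lra.
  apply (Rmult_le_reg_r (1 - Re l)); [lra|]. field_simplify; lra.
Qed.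

Lemma boundary_lipschitz (y : R) : Rabs (boundary y - boundary 0) <= 1/2 * Rabs y.
Proof.
  apply (MVT_abs_bound boundary boundary_deriv).
  - intros c _. apply derivable_pt_lim_boundary.
  - intros c _. apply Rabs_boundary_deriv_le.
Qed.

(** ** The image of [eta] *)

Definition eta_image (z : C) : Prop := exists w, Cplus_half w /\ eta a w = z.

Definition preimage_map (z w : C) : C := (z + log_pow (proj_right_half w))%C.

Lemma preimage_map_contraction (z u w : C) :
  Cmod (preimage_map z u - preimage_map z w) <= 1/3 * Cmod (u - w).
Proof.
  unfold preimage_map.
  replace (z + log_pow (proj_right_half u) - (z + log_pow (proj_right_half w)))%C
    with (log_pow (proj_right_half u) - log_pow (proj_right_half w))%C by ring.
  eapply Rle_trans; [apply log_pow_lipschitz; apply Re_proj_right_half_nonneg|].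
  pose proof (proj_right_half_nonexpansive u w). lra.
Qed.

Lemma preimage_map_fixed_of_eta (z w : C) : Cplus_half w -> eta a w = z -> preimage_map z w = w.
Proof.
  unfold Cplus_half, preimage_map. intros Hw E.
  rewrite proj_right_half_id, <- E, eta_eq by lra. ring.
Qed.

Lemma preimage_map_fixed_nonpos (z w : C) :
  preimage_map z w = w -> Re w <= 0 -> Re w = Re z - boundary (Im z).
Proof.
  unfold preimage_map, proj_right_half. intros Hw Hre. rewrite Rmax_left in Hw by exact Hre.
  assert (E1 : Re w = Re z + Re (log_pow (0, Im w))) by (rewrite <- Hw at 1; reflexivity).
  assert (E2 : Im w = Im z + Im (log_pow (0, Im w))) by (rewrite <- Hw at 1; reflexivity).
  assert (EY : eta_axis_im_inv (Im z) = Im w).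
  { replace (Im z) with (eta_axis_im (Im w)) by (unfold eta_axis_im; lra).
    apply eta_axis_im_inv_l. }
  unfold boundary. rewrite EY. lra.
Qed.

Lemma preimage_map_fixed_boundary (z : C) : Re z <= boundary (Im z) ->
  let w := (Re z - boundary (Im z), eta_axis_im_inv (Im z)) in preimage_map z w = w.
Proof.
  intros Hz w. set (y := eta_axis_im_inv (Im z)) in w.
  pose proof (eta_axis_im_inv_r (Im z)) as G. fold y in G. unfold eta_axis_im in G.
  unfold preimage_map, proj_right_half, w.
  cbn [Re Im fst snd]. rewrite Rmax_left by lra.
  apply injective_projections.
  - change (Re (z + log_pow (0, y)) = Re z - boundary (Im z)).
    rewrite re_plus. unfold boundary. fold y. lra.
  - change (Im (z + log_pow (0, y)) = y). rewrite im_plus. lra.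
Qed.

Lemma eta_image_iff (z : C) : eta_image z <-> boundary (Im z) < Re z.
Proof.
  split.
  - intros [w [Hw E]]. destruct (Rlt_or_le (boundary (Im z)) (Re z)) as [H|H]; [exact H|].
    exfalso.
    pose proof (contraction_fixed_point_unique (preimage_map z) (1/3) ltac:(lra)
      (preimage_map_contraction z) w _
      (preimage_map_fixed_of_eta z w Hw E) (preimage_map_fixed_boundary z H)) as Ew.
    unfold Cplus_half in Hw. rewrite Ew in Hw. simpl in Hw. lra.
  - intros H.
    destruct (contraction_fixed_point (preimage_map z) (1/3) ltac:(lra)
      (preimage_map_contraction z)) as [w Hw].
    destruct (Rlt_or_le 0 (Re w)) as [Hre|Hre].
    + exists w. split; [exact Hre|].
      unfold preimage_map in Hw. rewrite proj_right_half_id in Hw by lra.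
      rewrite eta_eq by lra. rewrite <- Hw at 1. ring.
    + pose proof (preimage_map_fixed_nonpos z w Hw Hre). lra.
Qed.

Lemma Cmod_log_shift_axis_le (y : R) : Cmod (log_shift (0, y)) <= ln (3 + Rabs y) + 2.
Proof.
  eapply Rle_trans; [apply Cmod_le_Rabs_Re_Im|].
  unfold log_shift, Clog.
  replace ((0, y) + RtoC 3)%C with ((3, y) : C) by (apply injective_projections; simpl; ring).
  cbn [Re Im fst snd]. rewrite Carg_Re_pos by (simpl; lra). simpl.
  assert (Hm : 3 <= Cmod (3, y)) by (eapply Rle_trans; [|apply Re_le_Cmod]; simpl; lra).
  assert (Hm2 : Cmod (3, y) <= 3 + Rabs y).
  { eapply Rle_trans; [apply Cmod_le_Rabs_Re_Im|]. simpl. rewrite Rabs_right by lra. lra. }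
  assert (0 <= ln (Cmod (3, y))) by (rewrite <- ln_1; apply ln_le; lra).
  assert (ln (Cmod (3, y)) <= ln (3 + Rabs y)) by (apply ln_le; lra).
  pose proof (atan_bound (y / 3)). pose proof PI_4.
  rewrite Rabs_right by lra.
  assert (Rabs (atan (y / 3)) <= 2) by (apply Rabs_le; lra).
  lra.
Qed.

Lemma boundary_ge (v : R) : - Rpower (ln (3 + 2 * Rabs v) + 2) a <= boundary v.
Proof.
  unfold boundary. apply Ropp_le_contravar.
  set (y := eta_axis_im_inv v).
  eapply Rle_trans; [apply Re_le_Cmod|]. rewrite Cmod_log_pow.
  apply Rle_Rpower_l; [lra|]. split.
  - apply Cmod_pos_of_Re_pos, Re_log_shift_pos. simpl. lra.
  - eapply Rle_trans; [apply Cmod_log_shift_axis_le|].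
    pose proof (Rabs_eta_axis_im_inv_le v). fold y in H. pose proof (Rabs_pos y).
    apply Rplus_le_compat_r, ln_le; lra.
Qed.

Lemma boundary_log_lower : exists Rr b, 0 < Rr /\ 0 < b < 1 /\
  forall y, Rr <= Rabs y -> - b * ln (Rabs y) <= boundary y.
Proof.
  destruct (Rpower_le_eps_mult a (1/4) ltac:(lra) ltac:(lra)) as [X0 [HX0 Hp]].
  set (M := Rmax 4 X0). exists (exp M), (1/2). split; [apply exp_pos|]. split; [lra|].
  intros v Hv.
  assert (HM4 : 4 <= M) by apply Rmax_l. assert (HMX : X0 <= M) by apply Rmax_r.
  assert (Hv3 : 3 <= Rabs v) by (pose proof (exp_ineq1_le M); lra).
  set (X := ln (Rabs v)).
  assert (HX : M <= X)
    by (unfold X; rewrite <- (ln_exp M); apply ln_le; [apply exp_pos | exact Hv]).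
  assert (HB : ln (3 + 2 * Rabs v) + 2 <= 2 * X).
  { assert (ln (3 + 2 * Rabs v) <= ln 3 + X)
      by (unfold X; rewrite <- ln_mult by lra; apply ln_le; lra).
    pose proof ln_3_bounds. lra. }
  assert (HB0 : 0 < ln (3 + 2 * Rabs v) + 2)
    by (assert (0 <= ln (3 + 2 * Rabs v)) by (rewrite <- ln_1; apply ln_le; lra); lra).
  pose proof (boundary_ge v).
  assert (Rpower (ln (3 + 2 * Rabs v) + 2) a <= Rpower (2 * X) a) by (apply Rle_Rpower_l; lra).
  assert (Rpower (2 * X) a <= 1/4 * (2 * X)) by (apply Hp; lra).
  fold X. lra.
Qed.

Lemma log_starlike_eta_image : log_starlike_at_infinity eta_image.
Proof.
  exists boundary. split; [|split; [|split]].
  - intros y. exists (boundary_deriv y). apply is_derive_Reals, derivable_pt_lim_boundary.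
  - exists 1. split; [lra|]. intros y.
    rewrite (is_derive_unique _ _ _ (proj2 (is_derive_Reals _ _ _) (derivable_pt_lim_boundary y))).
    pose proof (Rabs_boundary_deriv_le y). lra.
  - exact boundary_log_lower.
  - exact eta_image_iff.
Qed.

Lemma eta_image_real_far_right (B : R) : exists z, eta_image z /\ B <= Re z /\ Im z = 0.
Proof.
  set (x := Rmax 1 ((4 * B + 7) / 3)).
  assert (Hx1 : 1 <= x) by apply Rmax_l. assert (HxB : (4 * B + 7) / 3 <= x) by apply Rmax_r.
  exists (RtoC (x - Rpower (ln (x + 3)) a)). split; [|split; [|reflexivity]].
  - exists (RtoC x). split; [unfold Cplus_half; simpl; lra|].
    rewrite eta_eq, log_pow_real by (simpl; lra). now rewrite RtoC_minus.
  - simpl.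
    assert (H1 : 1 <= ln (x + 3))
      by (eapply Rle_trans; [apply ln_3_bounds | apply ln_le; lra]).
    pose proof (Rpower_le_self (ln (x + 3)) a H1 ltac:(lra)).
    pose proof (ln_le_sub_1 ((x + 3) / 4) ltac:(lra)).
    rewrite ln_div in H0 by lra.
    assert (ln 4 <= 2).
    { rewrite <- (ln_exp 2). apply ln_le; [lra|].
      replace 2 with (1 + 1) by ring. rewrite exp_plus. pose proof (exp_ineq1 1 ltac:(lra)). nra. }
    lra.
Qed.

(* The principal power of a point of the right half-plane has argument at most
   [a * PI / 2]. *)
Lemma Re_Cexp_scal_Clog_ge (L : C) : 0 < Re L ->
  cos (a * (PI / 2)) * Rpower (Cmod L) a <= Re (Cexp (RtoC a * Clog L)).
Proof.
  intros HL.
  replace (Re (Cexp (RtoC a * Clog L))) with (exp (a * ln (Cmod L)) * cos (a * Carg L))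
    by (unfold Cexp, Clog; simpl; f_equal; f_equal; ring).
  rewrite Carg_Re_pos by exact HL.
  set (th := atan (Im L / Re L)).
  pose proof (atan_bound (Im L / Re L)) as Hb. fold th in Hb. pose proof PI_RGT_0.
  assert (Hcos : cos (a * (PI / 2)) <= cos (a * th)).
  { apply cos_le_cos_of_Rabs_le. rewrite Rabs_mult, (Rabs_right a) by lra.
    split; [apply Rmult_le_compat_l; [lra | apply Rabs_le; lra] | nra]. }
  rewrite Rmult_comm. apply Rmult_le_compat_l; [left; apply exp_pos | exact Hcos].
Qed.

Lemma Re_log_pow_axis_ge (y : R) : 1 < Rabs y ->
  cos (a * (PI / 2)) * Rpower (ln (Rabs y)) a <= Re (log_pow (0, y)).
Proof.
  intros Hy. set (L := log_shift (0, y)).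
  assert (HReL : 0 < Re L) by (apply Re_log_shift_pos; simpl; lra).
  eapply Rle_trans; [|apply Re_Cexp_scal_Clog_ge, HReL].
  assert (Hc0 : 0 < cos (a * (PI / 2))) by (apply cos_gt_0; pose proof PI_RGT_0; nra).
  apply Rmult_le_compat_l; [lra|]. apply Rle_Rpower_l; [lra|].
  split; [rewrite <- ln_1; apply ln_increasing; lra|].
  eapply Rle_trans; [|apply Re_le_Cmod]. unfold L, log_shift, Clog. simpl Re.
  apply ln_le; [lra|].
  replace ((0, y) + RtoC 3)%C with ((3, y) : C) by (apply injective_projections; simpl; ring).
  apply (im_le_Cmod (3, y)).
Qed.

Lemma Re_log_pow_axis_unbounded (B : R) :
  exists Y0, 0 < Y0 /\ forall y, Y0 <= Rabs y -> B <= Re (log_pow (0, y)).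
Proof.
  set (k := cos (a * (PI / 2))).
  assert (Hk : 0 < k) by (apply cos_gt_0; pose proof PI_RGT_0; nra).
  set (X := Rpower (Rmax (B / k) 1) (/ a)).
  pose proof (Rmax_r (B / k) 1) as Hm1.
  assert (HXa : Rpower X a = Rmax (B / k) 1).
  { unfold X. rewrite Rpower_mult, Rinv_l, Rpower_1; [reflexivity | lra | apply Rgt_not_eq; lra]. }
  assert (HX1 : 1 <= X).
  { unfold X. apply Rle_trans with (Rpower (Rmax (B / k) 1) 0); [rewrite Rpower_O; lra|].
    apply Rle_Rpower; [lra | left; apply Rinv_0_lt_compat; lra]. }
  exists (exp X). split; [apply exp_pos|]. intros y Hy.
  assert (Hy1 : 1 < Rabs y) by (pose proof (exp_ineq1_le X); lra).
  eapply Rle_trans; [|apply Re_log_pow_axis_ge, Hy1]. fold k.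
  apply Rle_trans with (k * Rpower X a).
  - rewrite HXa. pose proof (Rmax_l (B / k) 1).
    apply Rle_trans with (k * (B / k)); [right; field; lra | apply Rmult_le_compat_l; lra].
  - apply Rmult_le_compat_l; [lra|]. apply Rle_Rpower_l; [lra|]. split; [lra|].
    rewrite <- (ln_exp X). apply ln_le; [apply exp_pos | exact Hy].
Qed.

Lemma eta_image_axis (y : R) : eta_image (- Re (log_pow (0, y)) + 1, eta_axis_im y).
Proof.
  apply eta_image_iff. cbn [Re Im fst snd]. unfold boundary. rewrite eta_axis_im_inv_l. lra.
Qed.

Lemma eta_image_far_left (B : R) : 0 <= B -> exists z1 z2, eta_image z1 /\ eta_image z2 /\
  Re z1 <= - B /\ Re z2 <= - B /\ B <= Im z1 /\ Im z2 <= - B.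
Proof.
  intros HB. destruct (Re_log_pow_axis_unbounded (B + 1)) as [Y0 [HY0 HY]].
  set (y := Rmax Y0 (3/2 * B)).
  assert (Hy0 : Y0 <= y) by apply Rmax_l. assert (HyB : 3/2 * B <= y) by apply Rmax_r.
  exists (- Re (log_pow (0, y)) + 1, eta_axis_im y),
    (- Re (log_pow (0, - y)) + 1, eta_axis_im (- y)).
  split; [apply eta_image_axis|]. split; [apply eta_image_axis|]. cbn [Re Im fst snd].
  pose proof (HY y ltac:(rewrite Rabs_right; lra)).
  pose proof (HY (- y) ltac:(rewrite Rabs_Ropp, Rabs_right; lra)).
  pose proof (eta_axis_im_expanding y 0 ltac:(lra)).
  pose proof (eta_axis_im_expanding 0 (- y) ltac:(lra)).
  rewrite eta_axis_im_0 in *. lra.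
Qed.

Lemma not_in_half_plane_eta_image : ~ in_some_half_plane eta_image.
Proof.
  intros [[p q] [t [Hc H]]].
  assert (Hre : forall z : C, Re (Cmult (p, q) z) = p * Re z - q * Im z)
    by (intros [x y]; simpl; ring).
  pose proof (Rle_abs (- t)) as Ht. rewrite Rabs_Ropp in Ht. pose proof (Rabs_pos t).
  destruct (Rlt_or_le p 0) as [Hp|Hp].
  - destruct (eta_image_real_far_right ((Rabs t + 1) / - p)) as [z [Hz [HzB Hz0]]].
    specialize (H z Hz). rewrite Hre, Hz0 in H.
    apply Rmult_le_compat_neg_l with (r := p) in HzB; [|lra].
    replace (p * ((Rabs t + 1) / - p)) with (- (Rabs t + 1)) in HzB by (field; lra). lra.
  - assert (Hpq : 0 < p + Rabs q).
    { destruct (Req_dec q 0) as [Eq|Eq].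
      - subst q. rewrite Rabs_R0.
        destruct (Req_dec p 0); [subst p; exfalso; apply Hc; reflexivity | lra].
      - pose proof (Rabs_pos_lt q Eq). lra. }
    set (B := (Rabs t + 1) / (p + Rabs q)).
    assert (HB : 0 <= B) by (apply Rdiv_le_0_compat; lra).
    destruct (eta_image_far_left B HB) as [z1 [z2 [H1 [H2 [Hr1 [Hr2 [Hi1 Hi2]]]]]]].
    assert (HBpq : (p + Rabs q) * B = Rabs t + 1) by (unfold B; field; lra).
    destruct (Rle_or_lt 0 q) as [Hq|Hq].
    + specialize (H z1 H1). rewrite Hre in H. rewrite Rabs_right in HBpq by lra. nra.
    + specialize (H z2 H2). rewrite Hre in H. rewrite Rabs_left in HBpq by lra. nra.
Qed.

(** ** A harmonic majorant *)

Lemma eta_image_Re_gt (z : C) :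
  eta_image z -> 1 - Rabs (Im z) / 2 < Re z + (Rabs (boundary 0) + 1).
Proof.
  intros Hz. apply eta_image_iff in Hz.
  pose proof (boundary_lipschitz (Im z)). pose proof (Rle_abs (- boundary 0)).
  pose proof (Rle_abs (- (boundary (Im z) - boundary 0))). rewrite Rabs_Ropp in *. lra.
Qed.

Lemma exp_scal_Re_le_sqrt_Im (lam : R) : lam <= 0 -> exists C0, 0 < C0 /\
  forall z, eta_image z -> exp (lam * Re z) <= C0 * sqrt (3 + 2 * Rabs (Im z)).
Proof.
  intros Hlam. destruct (Rpower_le_half_add a (- lam) ltac:(lra) ltac:(lra)) as [C1 HC1].
  exists (exp (C1 + 1)). split; [apply exp_pos|]. intros z Hz.
  set (B := ln (3 + 2 * Rabs (Im z)) + 2).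
  assert (HB : 0 < B) by (unfold B; pose proof (Rabs_pos (Im z));
    assert (0 <= ln (3 + 2 * Rabs (Im z))) by (rewrite <- ln_1; apply ln_le; lra); lra).
  apply eta_image_iff in Hz. pose proof (boundary_ge (Im z)). fold B in H.
  specialize (HC1 B HB).
  apply Rle_trans with (exp (B / 2 + C1)).
  - apply exp_le_compat. nra.
  - right. unfold B. rewrite <- Rpower_sqrt by (pose proof (Rabs_pos (Im z)); lra).
    unfold Rpower. rewrite <- exp_plus. f_equal. field.
Qed.

Lemma has_p_frequencies_eta_image : has_p_frequencies eta_image.
Proof.
  exists 1. split; [lra|]. intros lam Hlam. split.
  { intros z _. eexists. apply (is_derive_C_comp Cexp (fun w => RtoC lam * w)%C);
      [apply is_derive_Cexp | apply is_derive_C_scal, is_derive_C_id]. }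
  set (M := Rabs (boundary 0) + 1).
  destruct (exp_scal_Re_le_sqrt_Im lam Hlam) as [C0 [HC0 Hexp]].
  exists (fun z => 3 * C0 * re_sqrt (Re z + M) (Im z)). split.
  - intros z Hz. apply (harmonic_on_re_sqrt_shift M (3 * C0)).
    pose proof (eta_image_Re_gt z Hz). fold M in H.
    destruct (Req_dec (Im z) 0) as [E|E]; [right | left; exact E].
    rewrite E, Rabs_R0 in H. lra.
  - intros z Hz. unfold rpow. rewrite Cmod_Cexp, re_scal_l.
    destruct (Rle_dec (exp (lam * Re z)) 0) as [Hn|_]; [pose proof (exp_pos (lam * Re z)); lra|].
    rewrite Rpower_1 by apply exp_pos.
    eapply Rle_trans; [apply Hexp, Hz|].
    replace (3 * C0 * re_sqrt (Re z + M) (Im z)) with (C0 * (3 * re_sqrt (Re z + M) (Im z)))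
      by ring.
    apply Rmult_le_compat_l; [lra|]. apply sqrt_le_3_re_sqrt.
    pose proof (eta_image_Re_gt z Hz). fold M in H. lra.
Qed.

End LogPower.

Theorem proposition10p2 (a : R) (ha : 0 < a < 1) :
  let Om0 := fun z : C => exists w, Cplus_half w /\ eta a w = z in
  univalent_on Cplus_half (eta a) /\
  log_starlike_at_infinity Om0 /\
  has_p_frequencies Om0 /\
  ~ in_some_half_plane Om0.
Proof.
  intros Om0.
  exact (conj (eta_univalent a ha)
          (conj (log_starlike_eta_image a ha)
            (conj (has_p_frequencies_eta_image a ha) (not_in_half_plane_eta_image a ha)))).
Qed.
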